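(* Let $M,N\in\Lambda$. If $\mathrm{NF}(\mathcal T(M))=\mathrm{NF}(\mathcal T(N))$ then, for every head context $C[-]$, we have $\mathrm{NF}(\mathcal T(C[M]))=\mathrm{NF}(\mathcal T(C[N]))$.
   Context: $\lambda$-terms and values: $M::=V\mid MN$, $V::=x\mid\lambda x.M$, up to $\alpha$-conversion. A head context is $C[-]=(\lambda x_1\dots x_n.[-])V_1\cdots V_m$ with $n,m\ge0$ and $V_1,\dots,V_m$ values; $C[M]$ is obtained by replacing the hole by $M$ (possibly capturing free variables). Resource calculus: resource values $v::=x\mid\lambda x.t$; simple terms $s,t::=st\mid[v_1,\dots,v_k]$ (bags are finite multisets); $[x^n]$ is $n$ copies of $x$. Linear substitution $e\langle x:=v_1,\dots,v_n\rangle$ is the set of terms obtained by replacing the $n$ free occurrences of $x$ in $e$ bijectively by $v_1,\dots,v_n$ (over all permutations), or $\emptyset$ if $x$ does not occur exactly $n$ times free. Constructors extend multilinearly to sets. Rules: $(\beta_r)$ $[\lambda x.t][v_1,\dots,v_n]\to t\langle x:=v_1,\dots,v_n\rangle$; $(0)$ $[v_1,\dots,v_n]t\to\emptyset$ if $n\ne1$; $(\sigma_1)$ $[\lambda x.t]s_1s_2\to[\lambda x.ts_2]s_1$ if $x\notin\mathrm{FV}(s_1)$; $(\sigma_3)$ $[v]([\lambda x.t]s)\to[\lambda x.[v]t]s$ if $x\notin\mathrm{FV}(v)$. $\to_{\mathsf r}$ is the closure of these rules under abstraction, both sides of application, elements of bags, and on finite sets ($e\to\mathcal E_1$, $e\notin\mathcal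 E_2$ imply $\{e\}\cup\mathcal E_2\to\mathcal E_1\cup\mathcal E_2$); it is confluent and strongly normalizing, $\mathrm{nf}(e)$ is the normal form and $\mathrm{NF}(\mathcal E)=\bigcup_{e\in\mathcal E}\mathrm{nf}(e)$. Taylor expansion: $\mathcal T(x)=\{[x^n]\mid n\ge0\}$, $\mathcal T(\lambda x.N)=\{[\lambda x.t_1,\dots,\lambda x.t_n]\mid n\ge0,\ t_i\in\mathcal T(N)\}$, $\mathcal T(PQ)=\{st\mid s\in\mathcal T(P),t\in\mathcal T(Q)\}$. *)

(* Lambda-terms and resource terms in de Bruijn notation
   (this implements "up to alpha-conversion").  Bags are lists, taken up
   to permutation (recursively) via [req] below, which implements
   "bags are finite multisets".  Finite sets of resource terms are
   predicates [rterm -> Prop]. *)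
From Stdlib Require Import List Permutation Arith.
Import ListNotations.

Inductive lterm : Type :=
| LVar : nat -> lterm
| LLam : lterm -> lterm
| LApp : lterm -> lterm -> lterm.

Definition is_lval (V : lterm) : Prop :=
  match V with LApp _ _ => False | _ => True end.

(* head context C[-] = (\x1...xn.[-]) V1 ... Vm, plugged with M:
   M is put under n binders WITHOUT shifting (capture of its free
   indices 0..n-1 by x_n..x_1). *)
Fixpoint lams (n : nat) (M : lterm) : lterm :=
  match n with 0 => M | S n' => LLam (lams n' M) end.

Definition plug (n : nat) (Vs : list lterm) (M : lterm) : lterm :=
  fold_left LApp Vs (lams n M).

Inductive rterm : Type :=
| RApp : rterm -> rterm -> rterm
| RBag : list rval -> rterm
with rval : Type :=
| RVar : nat -> rval
| RLam : rterm -> rval.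

Fixpoint tlift (c : nat) (t : rterm) : rterm :=
  match t with
  | RApp s u => RApp (tlift c s) (tlift c u)
  | RBag b => RBag (map (vlift c) b)
  end
with vlift (c : nat) (v : rval) : rval :=
  match v with
  | RVar j => RVar (if Nat.leb c j then S j else j)
  | RLam t => RLam (tlift (S c) t)
  end.

(* Linear substitution, one bijection at a time: [LSubT k vs t t'] holds
   when the free occurrences of the variable of index k in t, read left
   to right, are replaced by the values of vs in that order (each lifted
   by the number k of binders crossed), other free indices above k being
   decremented (the binder of the redex disappears).  It fails (no t')
   unless the number of occurrences equals the length of vs. *)
Inductive LSubT (k : nat) : list rval -> rterm -> rterm -> Prop :=
| LS_app : forall vs1 vs2 s s' u u',
    LSubT k vs1 s s' -> LSubT k vs2 u u' ->
    LSubT k (vs1 ++ vs2) (RApp s u) (RApp s' u')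
| LS_bag : forall vs b b',
    LSubB k vs b b' -> LSubT k vs (RBag b) (RBag b')
with LSubB (k : nat) : list rval -> list rval -> list rval -> Prop :=
| LS_nil : LSubB k [] [] []
| LS_cons : forall vs1 vs2 v v' b b',
    LSubV k vs1 v v' -> LSubB k vs2 b b' ->
    LSubB k (vs1 ++ vs2) (v :: b) (v' :: b')
with LSubV (k : nat) : list rval -> rval -> rval -> Prop :=
| LS_lt : forall j, j < k -> LSubV k [] (RVar j) (RVar j)
| LS_gt : forall j, k < j -> LSubV k [] (RVar j) (RVar (pred j))
| LS_hit : forall v, LSubV k [v] (RVar k) (Nat.iter k (vlift 0) v)
| LS_lam : forall vs t t',
    LSubT (S k) vs t t' -> LSubV k vs (RLam t) (RLam t').

(* t<x := v1,...,vn> where x is the index-0 variable of t: union over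
   all bijections, i.e. all orderings of the list vs. *)
Definition lin_subst (t : rterm) (vs : list rval) : rterm -> Prop :=
  fun u => exists vs', Permutation vs vs' /\ LSubT 0 vs' t u.

(* One-step reduction e -> E (E a finite set of simple terms), closed
   under contexts, with multilinear extension of constructors. *)
Inductive rstep : rterm -> (rterm -> Prop) -> Prop :=
| St_beta : forall t vs,
    rstep (RApp (RBag [RLam t]) (RBag vs)) (lin_subst t vs)
| St_zero : forall b t, length b <> 1 ->
    rstep (RApp (RBag b) t) (fun _ => False)
| St_sigma1 : forall t s1 s2,
    (* [\x.t] s1 s2 -> [\x.t s2] s1 ; s2 goes under the binder *)
    rstep (RApp (RApp (RBag [RLam t]) s1) s2)
          (fun u => u = RApp (RBag [RLam (RApp t (tlift 0 s2))]) s1)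
| St_sigma3 : forall v t s,
    (* [v]([\x.t] s) -> [\x.[v] t] s ; v goes under the binder *)
    rstep (RApp (RBag [v]) (RApp (RBag [RLam t]) s))
          (fun u => u = RApp (RBag [RLam (RApp (RBag [vlift 0 v]) t)]) s)
| St_appL : forall s t S, rstep s S ->
    rstep (RApp s t) (fun u => exists s', S s' /\ u = RApp s' t)
| St_appR : forall s t T, rstep t T ->
    rstep (RApp s t) (fun u => exists t', T t' /\ u = RApp s t')
| St_bag : forall b1 v b2 V, vstep v V ->
    rstep (RBag (b1 ++ v :: b2))
          (fun u => exists v', V v' /\ u = RBag (b1 ++ v' :: b2))
with vstep : rval -> (rval -> Prop) -> Prop :=
| St_lam : forall t T, rstep t T ->
    vstep (RLam t) (fun w => exists t', T t' /\ w = RLam t').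

Definition rnormal (e : rterm) : Prop := ~ exists E, rstep e E.

Definition sstep (E E' : rterm -> Prop) : Prop :=
  exists e E1, E e /\ rstep e E1 /\
    forall u, E' u <-> ((E u /\ u <> e) \/ E1 u).

Inductive sred : (rterm -> Prop) -> (rterm -> Prop) -> Prop :=
| sred_refl : forall E, sred E E
| sred_step : forall E E' E'', sstep E E' -> sred E' E'' -> sred E E''.

(* F is a normal form of e  (by confluence and strong normalisation it is
   the normal form nf(e)) *)
Definition is_nf (e : rterm) (F : rterm -> Prop) : Prop :=
  sred (fun u => u = e) F /\ forall u, F u -> rnormal u.

Definition NF (E : rterm -> Prop) : rterm -> Prop :=
  fun t => exists e F, E e /\ is_nf e F /\ F t.

Fixpoint taylor (M : lterm) : rterm -> Prop :=
  match M with
  | LVar x => fun s => exists n, s = RBag (repeat (RVar x) n)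
  | LLam N => fun s => exists ts, Forall (taylor N) ts /\ s = RBag (map RLam ts)
  | LApp P Q => fun s => exists s1 s2, taylor P s1 /\ taylor Q s2 /\ s = RApp s1 s2
  end.

Inductive req : rterm -> rterm -> Prop :=
| req_app : forall s s' t t', req s s' -> req t t' -> req (RApp s t) (RApp s' t')
| req_bag : forall b b1 b2, Permutation b b1 -> bpw b1 b2 -> req (RBag b) (RBag b2)
with vreq : rval -> rval -> Prop :=
| vreq_var : forall j, vreq (RVar j) (RVar j)
| vreq_lam : forall t t', req t t' -> vreq (RLam t) (RLam t')
with bpw : list rval -> list rval -> Prop :=
| bpw_nil : bpw [] []
| bpw_cons : forall v v' b b', vreq v v' -> bpw b b' -> bpw (v :: b) (v' :: b').

Definition mset_eq (E F : rterm -> Prop) : Prop :=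
  forall t, (exists t', req t t' /\ E t') <-> (exists t', req t t' /\ F t').

From Stdlib Require Import List Permutation Arith Lia Classical.
Import ListNotations.

(* Resource reduction terminates, since a size/weight measure decreases, so
   every finite set of terms has normal forms.  Every critical pair is
   joinable at the level of normal forms, so by well-founded induction no
   reduction step loses a normal form.  Hence the normal forms of [s t], or of
   a bag [[\x.t1, ..., \x.tn]], are those of the same term with [s], resp.
   each [ti], replaced by one of its normal forms.  The Taylor expansion of
   [C[M]] is built from that of [M] by exactly these constructors, and
   multiset equality of terms is a bisimulation for reduction, so
   [NF(T(C[M]))] is determined, up to multiset equality, by [NF(T(M))]. *)

Section TermInd.
Variables (P : rterm -> Prop) (Q : rval -> Prop).
Hypothesis HApp : forall s t, P s -> P t -> P (RApp s t).
Hypothesis HBag : forall b, Forall Q b -> P (RBag b).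
Hypothesis HVar : forall j, Q (RVar j).
Hypothesis HLam : forall t, P t -> Q (RLam t).

Fixpoint rterm_ind' (t : rterm) : P t :=
  match t with
  | RApp s u => HApp s u (rterm_ind' s) (rterm_ind' u)
  | RBag b => HBag b ((fix bag_ind (l : list rval) : Forall Q l :=
                        match l with
                        | [] => Forall_nil _
                        | v :: l' => Forall_cons _ (rval_ind' v) (bag_ind l')
                        end) b)
  end
with rval_ind' (v : rval) : Q v :=
  match v with
  | RVar j => HVar j
  | RLam t => HLam t (rterm_ind' t)
  end.

Lemma rterm_rval_ind : (forall t, P t) /\ (forall v, Q v).
Proof. exact (conj rterm_ind' rval_ind'). Qed.
End TermInd.

Scheme LSubT_min := Minimality for LSubT Sort Prop
with LSubB_min := Minimality for LSubB Sort Prop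
with LSubV_min := Minimality for LSubV Sort Prop.
Combined Scheme LSub_mutind_k from LSubT_min, LSubB_min, LSubV_min.

Section LSubInd.
Variables (P : nat -> list rval -> rterm -> rterm -> Prop)
  (P0 : nat -> list rval -> list rval -> list rval -> Prop)
  (P1 : nat -> list rval -> rval -> rval -> Prop).
Hypothesis HApp : forall k vs1 vs2 s s' u u', LSubT k vs1 s s' -> P k vs1 s s' ->
  LSubT k vs2 u u' -> P k vs2 u u' -> P k (vs1 ++ vs2) (RApp s u) (RApp s' u').
Hypothesis HBag : forall k vs b b', LSubB k vs b b' -> P0 k vs b b' -> P k vs (RBag b) (RBag b').
Hypothesis HNil : forall k, P0 k [] [] [].
Hypothesis HCons : forall k vs1 vs2 v v' b b', LSubV k vs1 v v' -> P1 k vs1 v v' ->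
  LSubB k vs2 b b' -> P0 k vs2 b b' -> P0 k (vs1 ++ vs2) (v :: b) (v' :: b').
Hypothesis HLt : forall k j, j < k -> P1 k [] (RVar j) (RVar j).
Hypothesis HGt : forall k j, k < j -> P1 k [] (RVar j) (RVar (pred j)).
Hypothesis HHit : forall k v, P1 k [v] (RVar k) (Nat.iter k (vlift 0) v).
Hypothesis HLam : forall k vs t t', LSubT (S k) vs t t' -> P (S k) vs t t' ->
  P1 k vs (RLam t) (RLam t').

Lemma LSub_mutind : (forall k vs t u, LSubT k vs t u -> P k vs t u) /\
  (forall k vs b b', LSubB k vs b b' -> P0 k vs b b') /\
  (forall k vs v v', LSubV k vs v v' -> P1 k vs v v').
Proof.
  pose proof (LSub_mutind_k P P0 P1 HApp HBag HNil HCons HLt HGt HHit HLam) as H.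
  split; [|split]; intro k; apply (H k).
Qed.
End LSubInd.

Scheme rstep_min := Minimality for rstep Sort Prop
with vstep_min := Minimality for vstep Sort Prop.
Combined Scheme step_mutind from rstep_min, vstep_min.

(** * Lifting, size and weight *)

Ltac case_nat :=
  repeat match goal with
  | |- context [Nat.leb ?a ?b] => destruct (Nat.leb_spec a b); cbn -[Nat.leb Nat.eqb]
  | |- context [Nat.eqb ?a ?b] => destruct (Nat.eqb_spec a b); cbn -[Nat.leb Nat.eqb]
  end.

Lemma lift_comm :
  (forall t c d, c <= d -> tlift (S d) (tlift c t) = tlift c (tlift d t)) /\
  (forall v c d, c <= d -> vlift (S d) (vlift c v) = vlift c (vlift d v)).
Proof.
  apply rterm_rval_ind; cbn -[Nat.leb]; intros.
  - rewrite H, H0; auto.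
  - f_equal. rewrite !map_map. induction H; simpl; auto. rewrite H, IHForall; auto.
  - case_nat; f_equal; lia.
  - rewrite H; auto. lia.
Qed.

Definition shift (n : nat) (v : rval) : rval := Nat.iter n (vlift 0) v.

Lemma vlift_shift_low n c v : c <= n -> vlift c (shift n v) = shift (S n) v.
Proof.
  revert c. induction n; intros c H.
  - replace c with 0 by lia. reflexivity.
  - destruct c; [reflexivity|].
    change (shift (S n) v) with (vlift 0 (shift n v)).
    rewrite (proj2 lift_comm), IHn by lia. reflexivity.
Qed.

Lemma vlift_shift_high n c v : n <= c -> vlift c (shift n v) = shift n (vlift (c - n) v).
Proof.
  revert c. induction n; intros c H.
  - rewrite Nat.sub_0_r. reflexivity.
  - destruct c; [lia|].
    change (shift (S ?m) ?w) with (vlift 0 (shift m w)).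
    rewrite (proj2 lift_comm), IHn by lia. reflexivity.
Qed.

Arguments list_sum : simpl never.

Lemma list_sum_nil : list_sum [] = 0.
Proof. reflexivity. Qed.

Lemma list_sum_cons n l : list_sum (n :: l) = n + list_sum l.
Proof. reflexivity. Qed.

Fixpoint tsize (t : rterm) : nat :=
  match t with
  | RApp s u => S (tsize s + tsize u)
  | RBag b => S (list_sum (map vsize b))
  end
with vsize (v : rval) : nat :=
  match v with RVar _ => 1 | RLam t => S (tsize t) end.

(* The weight is multiplicative on applications, so that the sigma-rules,
   which preserve the size, strictly decrease it. *)
Fixpoint tweight (t : rterm) : nat :=
  match t with
  | RApp s u => tweight s * tweight u
  | RBag b => 2 + list_sum (map vweight b)
  end
with vweight (v : rval) : nat :=
  match v with RVar _ => 2 | RLam t => tweight t end.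

Lemma weight_ge2 : (forall t, 2 <= tweight t) /\ (forall v, 2 <= vweight v).
Proof. apply rterm_rval_ind; simpl; intros; nia. Qed.

Lemma size_weight_lift :
  (forall t c, tsize (tlift c t) = tsize t /\ tweight (tlift c t) = tweight t) /\
  (forall v c, vsize (vlift c v) = vsize v /\ vweight (vlift c v) = vweight v).
Proof.
  apply rterm_rval_ind; simpl; intros.
  - destruct (H c), (H0 c). split; congruence.
  - rewrite !map_map. induction H; simpl; auto.
    destruct (H c), IHForall. rewrite !list_sum_cons. split; lia.
  - auto.
  - destruct (H (S c)). split; congruence.
Qed.

Lemma size_weight_shift n v : vsize (shift n v) = vsize v /\ vweight (shift n v) = vweight v.
Proof.
  induction n as [|n [IHs IHw]]; auto.
  change (shift (S n) v) with (vlift 0 (shift n v)).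
  destruct (proj2 size_weight_lift (shift n v) 0). split; congruence.
Qed.

(** * Linear substitution *)

Fixpoint tocc (k : nat) (t : rterm) : nat :=
  match t with
  | RApp s u => tocc k s + tocc k u
  | RBag b => list_sum (map (vocc k) b)
  end
with vocc (k : nat) (v : rval) : nat :=
  match v with
  | RVar j => if Nat.eqb j k then 1 else 0
  | RLam t => tocc (S k) t
  end.

Lemma LSub_length :
  (forall k vs t u, LSubT k vs t u -> length vs = tocc k t) /\
  (forall k vs b b', LSubB k vs b b' -> length vs = list_sum (map (vocc k) b)) /\
  (forall k vs v v', LSubV k vs v v' -> length vs = vocc k v).
Proof.
  apply LSub_mutind; intros; cbn -[Nat.eqb];
    rewrite ?length_app, ?list_sum_cons, ?list_sum_nil; case_nat; lia.
Qed.

Lemma LSubT_app_inv k vs s r u : LSubT k vs (RApp s r) u ->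
  exists vs1 vs2 s' r', vs = vs1 ++ vs2 /\ u = RApp s' r' /\ LSubT k vs1 s s' /\ LSubT k vs2 r r'.
Proof. intro H. inversion H; subst. do 4 eexists; eauto. Qed.

Lemma LSubT_bag_inv k vs b u : LSubT k vs (RBag b) u -> exists b', u = RBag b' /\ LSubB k vs b b'.
Proof. intro H. inversion H; subst. eauto. Qed.

Lemma LSubB_nil_inv k vs c : LSubB k vs [] c -> vs = [] /\ c = [].
Proof. intro H. inversion H; subst; auto. Qed.

Lemma LSubB_cons_inv k vs v b c : LSubB k vs (v :: b) c ->
  exists vs1 vs2 v' b', vs = vs1 ++ vs2 /\ c = v' :: b' /\ LSubV k vs1 v v' /\ LSubB k vs2 b b'.
Proof. intro H. inversion H; subst. do 4 eexists; eauto. Qed.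

Lemma LSubB_nil_inv_r k vs c : LSubB k vs c [] -> vs = [] /\ c = [].
Proof. intro H. inversion H; subst; auto. Qed.

Lemma LSubB_cons_inv_r k vs v b c : LSubB k vs c (v :: b) ->
  exists vs1 vs2 v0 b0, vs = vs1 ++ vs2 /\ c = v0 :: b0 /\ LSubV k vs1 v0 v /\ LSubB k vs2 b0 b.
Proof. intro H. inversion H; subst. do 4 eexists; eauto. Qed.

Lemma LSubV_lam_inv k vs t y : LSubV k vs (RLam t) y ->
  exists t', y = RLam t' /\ LSubT (S k) vs t t'.
Proof. intro H. inversion H; subst. eauto. Qed.

Lemma LSubV_var_inv k vs j y : LSubV k vs (RVar j) y ->
  (j < k /\ vs = [] /\ y = RVar j) \/ (k < j /\ vs = [] /\ y = RVar (pred j)) \/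
  (j = k /\ exists w, vs = [w] /\ y = shift k w).
Proof. intro H. inversion H; subst; eauto 10. Qed.

Lemma app_inj_length {A} (l1 l2 l1' l2' : list A) :
  l1 ++ l2 = l1' ++ l2' -> length l1 = length l1' -> l1 = l1' /\ l2 = l2'.
Proof.
  revert l1'. induction l1; destruct l1'; simpl; intros E L; try discriminate; auto.
  injection E as -> E. destruct (IHl1 l1' E) as [-> ->]; auto.
Qed.

Lemma LSub_functional :
  (forall k vs t u, LSubT k vs t u -> forall u', LSubT k vs t u' -> u = u') /\
  (forall k vs b b', LSubB k vs b b' -> forall b'', LSubB k vs b b'' -> b' = b'') /\
  (forall k vs v v', LSubV k vs v v' -> forall v'', LSubV k vs v v'' -> v' = v'').
Proof.
  apply LSub_mutind.
  - intros k vs1 vs2 s s' u u' Hs IHs _ IHu x Hx.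
    apply LSubT_app_inv in Hx as (ws1 & ws2 & s'' & u'' & E & -> & Hs' & Hu').
    destruct (app_inj_length _ _ _ _ E) as [-> ->].
    { rewrite ((proj1 LSub_length) _ _ _ _ Hs), ((proj1 LSub_length) _ _ _ _ Hs'). reflexivity. }
    f_equal; auto.
  - intros k vs b b' _ IH x Hx. apply LSubT_bag_inv in Hx as (b'' & -> & Hb). f_equal. auto.
  - intros k x Hx. apply LSubB_nil_inv in Hx as [_ ->]. reflexivity.
  - intros k vs1 vs2 v v' b b' Hv IHv _ IHb x Hx.
    apply LSubB_cons_inv in Hx as (ws1 & ws2 & v'' & b'' & E & -> & Hv' & Hb').
    destruct (app_inj_length _ _ _ _ E) as [-> ->].
    { rewrite (proj2 (proj2 LSub_length) _ _ _ _ Hv), (proj2 (proj2 LSub_length) _ _ _ _ Hv').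
      reflexivity. }
    f_equal; auto.
  - intros k j H x Hx. inversion Hx; subst; auto; lia.
  - intros k j H x Hx. inversion Hx; subst; auto; lia.
  - intros k v x Hx. inversion Hx; subst; auto; lia.
  - intros k vs t t' _ IH x Hx. apply LSubV_lam_inv in Hx as (t'' & -> & Ht). f_equal. auto.
Qed.

Lemma LSub_total :
  (forall t k vs, length vs = tocc k t -> exists u, LSubT k vs t u) /\
  (forall v k vs, length vs = vocc k v -> exists v', LSubV k vs v v').
Proof.
  apply rterm_rval_ind.
  - intros s u IHs IHu k vs H. simpl in H.
    rewrite <- (firstn_skipn (tocc k s) vs).
    destruct (IHs k (firstn (tocc k s) vs)) as [s' Hs]; [rewrite length_firstn; lia|].
    destruct (IHu k (skipn (tocc k s) vs)) as [u' Hu]; [rewrite length_skipn; lia|].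
    exists (RApp s' u'). constructor; auto.
  - intros b Hb k. simpl.
    enough (HB : forall vs, length vs = list_sum (map (vocc k) b) -> exists b', LSubB k vs b b')
      by (intros vs Hv; destruct (HB vs Hv) as [b' ?]; exists (RBag b'); constructor; auto).
    induction Hb as [|x l Hx _ IHl]; intros vs Hv; cbn [map] in Hv;
      rewrite ?list_sum_cons, ?list_sum_nil in Hv.
    + destruct vs; [|discriminate]. exists []. constructor.
    + rewrite <- (firstn_skipn (vocc k x) vs).
      destruct (Hx k (firstn (vocc k x) vs)) as [x' ?]; [rewrite length_firstn; lia|].
      destruct (IHl (skipn (vocc k x) vs)) as [l' ?]; [rewrite length_skipn; lia|].
      exists (x' :: l'). constructor; auto.
  - intros j k vs H. simpl in H. destruct (Nat.eqb_spec j k) as [->|Hjk].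
    + destruct vs as [|v [|]]; try discriminate. eexists. constructor.
    + destruct vs; [|discriminate]. destruct (Nat.lt_gt_cases j k) as [[Hl|Hl] _]; [lia| |].
      * eexists. apply LS_lt. auto.
      * eexists. apply LS_gt. auto.
  - intros t IH k vs H. destruct (IH (S k) vs H) as [t' Ht]. exists (RLam t'). constructor. auto.
Qed.

Lemma LSub_size :
  (forall k vs t u, LSubT k vs t u -> tsize u + length vs = tsize t + list_sum (map vsize vs)) /\
  (forall k vs b b', LSubB k vs b b' ->
     list_sum (map vsize b') + length vs = list_sum (map vsize b) + list_sum (map vsize vs)) /\
  (forall k vs v v', LSubV k vs v v' -> vsize v' + length vs = vsize v + list_sum (map vsize vs)).
Proof.
  apply LSub_mutind; intros; simpl;
    rewrite ?map_app, ?list_sum_app, ?length_app, ?list_sum_cons, ?list_sum_nil; try lia.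
  fold (shift k v). destruct (size_weight_shift k v). lia.
Qed.

Lemma LSub_lift_low :
  (forall k vs t u, LSubT k vs t u -> forall c, c <= k ->
     LSubT (S k) vs (tlift c t) (tlift c u)) /\
  (forall k vs b b', LSubB k vs b b' -> forall c, c <= k ->
     LSubB (S k) vs (map (vlift c) b) (map (vlift c) b')) /\
  (forall k vs v v', LSubV k vs v v' -> forall c, c <= k ->
     LSubV (S k) vs (vlift c v) (vlift c v')).
Proof.
  apply LSub_mutind; intros; cbn -[Nat.leb]; case_nat; try lia; try (constructor; auto; lia).
  - replace (S (pred j)) with j by lia. apply LS_gt. lia.
  - fold (shift k v). rewrite vlift_shift_low by lia. apply LS_hit.
  - constructor. auto with arith.
Qed.

Lemma LSub_lift_high :
  (forall k vs t u, LSubT k vs t u -> forall c, k <= c ->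
     LSubT k (map (vlift (c - k)) vs) (tlift (S c) t) (tlift c u)) /\
  (forall k vs b b', LSubB k vs b b' -> forall c, k <= c ->
     LSubB k (map (vlift (c - k)) vs) (map (vlift (S c)) b) (map (vlift c) b')) /\
  (forall k vs v v', LSubV k vs v v' -> forall c, k <= c ->
     LSubV k (map (vlift (c - k)) vs) (vlift (S c) v) (vlift c v')).
Proof.
  apply LSub_mutind; intros; cbn -[Nat.leb]; rewrite ?map_app; case_nat; try lia;
    try (constructor; auto; lia).
  - replace (S (pred j)) with j by lia. apply LS_gt. lia.
  - fold (shift k v). rewrite vlift_shift_high by lia. apply LS_hit.
  - constructor. replace (c - k) with (S c - S k) by lia. auto with arith.
Qed.

Lemma occ_lift_low :
  (forall t k c, c <= k -> tocc (S k) (tlift c t) = tocc k t) /\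
  (forall v k c, c <= k -> vocc (S k) (vlift c v) = vocc k v).
Proof.
  apply rterm_rval_ind; intros; cbn -[Nat.eqb Nat.leb].
  - rewrite H, H0; auto.
  - rewrite map_map. induction H; auto. cbn [map]. rewrite !list_sum_cons, H, IHForall; auto.
  - case_nat; lia.
  - apply H. lia.
Qed.

Lemma occ_lift_high :
  (forall t k c, k <= c -> tocc k (tlift (S c) t) = tocc k t) /\
  (forall v k c, k <= c -> vocc k (vlift (S c) v) = vocc k v).
Proof.
  apply rterm_rval_ind; intros; cbn -[Nat.eqb Nat.leb].
  - rewrite H, H0; auto.
  - rewrite map_map. induction H; auto. cbn [map]. rewrite !list_sum_cons, H, IHForall; auto.
  - case_nat; lia.
  - apply H. lia.
Qed.

Lemma LSub_lift_nil :
  (forall t k, LSubT k [] (tlift k t) t) /\ (forall v k, LSubV k [] (vlift k v) v).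
Proof.
  apply rterm_rval_ind; intros; simpl.
  - apply (LS_app k [] []); auto.
  - constructor. induction H; simpl; [constructor|]. apply (LS_cons k [] []); auto.
  - case_nat.
    + replace j with (pred (S j)) at 2 by lia. apply LS_gt. lia.
    + constructor. auto.
  - constructor. auto.
Qed.

Lemma LSubV_shift n k B w0 w : LSubV k B w0 w -> LSubV (n + k) B (shift n w0) (shift n w).
Proof.
  induction n; intros; auto.
  apply (proj2 (proj2 LSub_lift_low)); auto. lia.
Qed.

Lemma LSubB_app k B1 B2 b1 b2 c1 c2 : LSubB k B1 b1 c1 -> LSubB k B2 b2 c2 ->
  LSubB k (B1 ++ B2) (b1 ++ b2) (c1 ++ c2).
Proof.
  intro H. revert B2 b2 c2. induction H; intros; simpl; auto.
  rewrite <- app_assoc. constructor; auto.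
Qed.

Lemma LSubB_app_inv k B b1 b2 c : LSubB k B (b1 ++ b2) c ->
  exists B1 B2 c1 c2, B = B1 ++ B2 /\ c = c1 ++ c2 /\ LSubB k B1 b1 c1 /\ LSubB k B2 b2 c2.
Proof.
  revert B c. induction b1; intros B c H; simpl in H.
  - exists [], B, [], c. repeat split; auto. constructor.
  - apply LSubB_cons_inv in H as (vs1 & vs2 & v' & b' & -> & -> & Hv & Hb).
    destruct (IHb1 _ _ Hb) as (B1 & B2 & c1 & c2 & -> & -> & H1 & H2).
    exists (vs1 ++ B1), B2, (v' :: c1), c2. rewrite app_assoc. repeat split; auto.
    constructor; auto.
Qed.

Lemma LSubB_app_inv_r k B b c1 c2 : LSubB k B b (c1 ++ c2) ->
  exists B1 B2 b1 b2, B = B1 ++ B2 /\ b = b1 ++ b2 /\ LSubB k B1 b1 c1 /\ LSubB k B2 b2 c2.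
Proof.
  revert B b. induction c1; intros B b H; simpl in H.
  - exists [], B, [], b. repeat split; auto. constructor.
  - apply LSubB_cons_inv_r in H as (vs1 & vs2 & v' & b' & -> & -> & Hv & Hb).
    destruct (IHc1 _ _ Hb) as (B1 & B2 & b1 & b2 & -> & -> & H1 & H2).
    exists (vs1 ++ B1), B2, (v' :: b1), b2. rewrite app_assoc. repeat split; auto.
    constructor; auto.
Qed.

Lemma LSubB_length k B b c : LSubB k B b c -> length b = length c.
Proof. induction 1; simpl; auto. Qed.

Lemma LSubB_single k B v v' : LSubV k B v v' -> LSubB k B [v] [v'].
Proof. intro H. rewrite <- (app_nil_r B). constructor; auto. constructor. Qed.

Lemma LSubB_single_inv k B v c : LSubB k B [v] c -> exists v', c = [v'] /\ LSubV k B v v'.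
Proof.
  intro H. apply LSubB_cons_inv in H as (vs1 & vs2 & v' & b' & -> & -> & Hv & Hb).
  apply LSubB_nil_inv in Hb as [-> ->]. rewrite app_nil_r. eauto.
Qed.

Lemma LSubB_single_inv_r k B v c : LSubB k B c [v] -> exists v0, c = [v0] /\ LSubV k B v0 v.
Proof.
  intro H. apply LSubB_cons_inv_r in H as (vs1 & vs2 & v' & b' & -> & -> & Hv & Hb).
  apply LSubB_nil_inv_r in Hb as [-> ->]. rewrite app_nil_r. eauto.
Qed.

Lemma perm_app_swap_middle {A} (a1 b1 a2 b2 : list A) :
  Permutation ((a1 ++ b1) ++ (a2 ++ b2)) ((a1 ++ a2) ++ (b1 ++ b2)).
Proof.
  rewrite <- !app_assoc. apply Permutation_app_head.
  rewrite !app_assoc. apply Permutation_app_tail. apply Permutation_app_comm.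
Qed.

Lemma LSubB_perm_l k B W0 W W0' : LSubB k B W0 W -> Permutation W0 W0' ->
  exists B' W', Permutation B B' /\ Permutation W W' /\ LSubB k B' W0' W'.
Proof.
  intros H HP. revert B W H. induction HP; intros B W H.
  - apply LSubB_nil_inv in H as [-> ->]. exists [], []. repeat constructor.
  - apply LSubB_cons_inv in H as (vs1 & vs2 & v' & b' & -> & -> & Hv & Hb).
    destruct (IHHP _ _ Hb) as (B' & W' & P1 & P2 & H).
    exists (vs1 ++ B'), (v' :: W'). repeat split; auto using Permutation_app_head.
    constructor; auto.
  - apply LSubB_cons_inv in H as (vs1 & vs2 & v' & b' & -> & -> & Hv & Hb).
    apply LSubB_cons_inv in Hb as (vs3 & vs4 & v'' & b'' & -> & -> & Hv' & Hb).
    exists (vs3 ++ vs1 ++ vs4), (v'' :: v' :: b''). repeat split.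
    + apply Permutation_app_swap_app.
    + constructor.
    + constructor; auto. constructor; auto.
  - destruct (IHHP1 _ _ H) as (B1 & W1 & P1 & P2 & H1).
    destruct (IHHP2 _ _ H1) as (B2 & W2 & P3 & P4 & H2).
    exists B2, W2. eauto using Permutation_trans.
Qed.

Lemma LSubB_perm_r k B W0 W W' : LSubB k B W0 W -> Permutation W W' ->
  exists B' W0', Permutation B B' /\ Permutation W0 W0' /\ LSubB k B' W0' W'.
Proof.
  intros H HP. revert B W0 H. induction HP; intros B W0 H.
  - apply LSubB_nil_inv_r in H as [-> ->]. exists [], []. repeat constructor.
  - apply LSubB_cons_inv_r in H as (vs1 & vs2 & v' & b' & -> & -> & Hv & Hb).
    destruct (IHHP _ _ Hb) as (B' & W1 & P1 & P2 & H).
    exists (vs1 ++ B'), (v' :: W1). repeat split; auto using Permutation_app_head.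
    constructor; auto.
  - apply LSubB_cons_inv_r in H as (vs1 & vs2 & v' & b' & -> & -> & Hv & Hb).
    apply LSubB_cons_inv_r in Hb as (vs3 & vs4 & v'' & b'' & -> & -> & Hv' & Hb).
    exists (vs3 ++ vs1 ++ vs4), (v'' :: v' :: b''). repeat split.
    + apply Permutation_app_swap_app.
    + constructor.
    + constructor; auto. constructor; auto.
  - destruct (IHHP1 _ _ H) as (B1 & W1 & P1 & P2 & H1).
    destruct (IHHP2 _ _ H1) as (B2 & W2 & P3 & P4 & H2).
    exists B2, W2. eauto using Permutation_trans.
Qed.

(* Substituting into a lifted term: since [LSub] is functional and total,
   it suffices to know the number of occurrences. *)
Lemma LSubT_lift_low_inv k vs t c y : c <= k -> LSubT (S k) vs (tlift c t) y ->
  exists u, y = tlift c u /\ LSubT k vs t u.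
Proof.
  intros Hc H. pose proof ((proj1 LSub_length) _ _ _ _ H) as Hn.
  rewrite (proj1 occ_lift_low) in Hn by auto.
  destruct ((proj1 LSub_total) t k vs Hn) as [u Hu]. exists u. split; auto.
  eapply (proj1 LSub_functional); [apply H|]. apply (proj1 LSub_lift_low); auto.
Qed.

Lemma LSubV_lift_low_inv k vs v c y : c <= k -> LSubV (S k) vs (vlift c v) y ->
  exists u, y = vlift c u /\ LSubV k vs v u.
Proof.
  intros Hc H. pose proof ((proj2 (proj2 LSub_length)) _ _ _ _ H) as Hn.
  rewrite (proj2 occ_lift_low) in Hn by auto.
  destruct ((proj2 LSub_total) v k vs Hn) as [u Hu]. exists u. split; auto.
  eapply (proj2 (proj2 LSub_functional)); [apply H|]. apply (proj2 (proj2 LSub_lift_low)); auto.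
Qed.

Lemma LSubT_lift_high_inv k vs t c y : k <= c ->
  LSubT k (map (vlift (c - k)) vs) (tlift (S c) t) y ->
  exists u, y = tlift c u /\ LSubT k vs t u.
Proof.
  intros Hc H. pose proof ((proj1 LSub_length) _ _ _ _ H) as Hn.
  rewrite (proj1 occ_lift_high), length_map in Hn by auto.
  destruct ((proj1 LSub_total) t k vs Hn) as [u Hu]. exists u. split; auto.
  eapply (proj1 LSub_functional); [apply H|]. apply (proj1 LSub_lift_high); auto.
Qed.

Lemma LSubT_lift_nil_inv k W s y : LSubT k W (tlift k s) y -> W = [] /\ y = s.
Proof.
  intro H. pose proof ((proj1 LSub_lift_nil) s k) as H0.
  pose proof ((proj1 LSub_length) _ _ _ _ H). pose proof ((proj1 LSub_length) _ _ _ _ H0).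
  destruct W; simpl in *; [|lia]. split; auto. eapply (proj1 LSub_functional); eauto.
Qed.

Lemma LSubV_lift_nil_inv k W s y : LSubV k W (vlift k s) y -> W = [] /\ y = s.
Proof.
  intro H. pose proof ((proj2 LSub_lift_nil) s k) as H0.
  pose proof ((proj2 (proj2 LSub_length)) _ _ _ _ H).
  pose proof ((proj2 (proj2 LSub_length)) _ _ _ _ H0).
  destruct W; simpl in *; [|lia]. split; auto. eapply (proj2 (proj2 LSub_functional)); eauto.
Qed.

Lemma LSubV_shift_inv n k L w0 y : LSubV (n + k) L (shift n w0) y ->
  exists w, y = shift n w /\ LSubV k L w0 w.
Proof.
  revert y. induction n; intros y H; simpl in *; eauto.
  fold (shift n w0) in H.
  destruct (LSubV_lift_low_inv (n + k) L (shift n w0) 0 y ltac:(lia) H) as (u & -> & Hu).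
  destruct (IHn _ Hu) as (w & -> & Hw). eauto.
Qed.

Lemma LSubV_shift_nil i k a y W : LSubV i W (shift (i + S k) a) y ->
  W = [] /\ y = shift (i + k) a.
Proof.
  intro H. replace (i + S k) with (S (i + k)) in H by lia.
  rewrite <- (vlift_shift_low (i + k) i a) in H by lia.
  apply LSubV_lift_nil_inv in H. auto.
Qed.

Lemma LSub_subst_var i k A j a' W y B W0 : LSubV (i + S k) A (RVar j) a' ->
  LSubV i W a' y -> LSubB k B W0 W ->
  exists z L, LSubV i W0 (RVar j) z /\ Permutation L (A ++ B) /\ LSubV (i + k) L z y.
Proof.
  intros Ha Hy HB.
  apply LSubV_var_inv in Ha as [(Hj & -> & ->)|[(Hj & -> & ->)|(-> & a & -> & ->)]].
  - apply LSubV_var_inv in Hy as [(H1 & -> & ->)|[(H1 & -> & ->)|(-> & w & -> & ->)]].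
    + apply LSubB_nil_inv_r in HB as [-> ->].
      exists (RVar j), []. repeat split; try constructor; auto. lia.
    + apply LSubB_nil_inv_r in HB as [-> ->].
      exists (RVar (pred j)), []. repeat split; try constructor; auto; lia.
    + apply LSubB_single_inv_r in HB as (w0 & -> & Hw).
      exists (shift i w0), B. repeat split; [apply LS_hit|apply Permutation_refl|].
      apply LSubV_shift. auto.
  - apply LSubV_var_inv in Hy as [(H1 & -> & ->)|[(H1 & -> & ->)|(H1 & w & -> & ->)]]; try lia.
    apply LSubB_nil_inv_r in HB as [-> ->].
    exists (RVar (pred j)), []. repeat split; try constructor; auto; lia.
  - apply LSubV_shift_nil in Hy as [-> ->]. apply LSubB_nil_inv_r in HB as [-> ->].
    exists (RVar (i + k)), [a]. repeat split; [|apply Permutation_refl|apply LS_hit].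
    replace (RVar (i + k)) with (RVar (pred (i + S k))) by (f_equal; lia). apply LS_gt. lia.
Qed.

Lemma LSub_subst_var_inv i W0 j z k L y : LSubV i W0 (RVar j) z -> LSubV (i + k) L z y ->
  exists A B W a', Permutation L (A ++ B) /\ LSubV (i + S k) A (RVar j) a' /\
    LSubB k B W0 W /\ LSubV i W a' y.
Proof.
  intros Hz Hy.
  apply LSubV_var_inv in Hz as [(Hj & -> & ->)|[(Hj & -> & ->)|(-> & w0 & -> & ->)]].
  - apply LSubV_var_inv in Hy as [(H1 & -> & ->)|[(H1 & -> & ->)|(H1 & w & -> & ->)]]; try lia.
    exists [], [], [], (RVar j). repeat split; try constructor; lia.
  - apply LSubV_var_inv in Hy as [(H1 & -> & ->)|[(H1 & -> & ->)|(H1 & w & -> & ->)]].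
    + exists [], [], [], (RVar j). repeat split; try constructor; lia.
    + exists [], [], [], (RVar (pred j)). repeat split; try constructor; try apply LS_gt; lia.
    + exists [w], [], [], (shift (i + S k) w). repeat split; [apply Permutation_refl| | |].
      * replace (i + S k) with j by lia. apply LS_hit.
      * constructor.
      * replace (i + S k) with (S (i + k)) by lia.
        rewrite <- (vlift_shift_low (i + k) i w) by lia. apply (proj2 LSub_lift_nil).
  - destruct (LSubV_shift_inv i k L w0 y Hy) as (w & -> & Hw).
    exists [], L, [w], (RVar i). repeat split.
    + apply Permutation_refl.
    + constructor. lia.
    + apply LSubB_single. auto.
    + apply LS_hit.
Qed.

Lemma LSub_subst :
  (forall k' A a a', LSubT k' A a a' -> forall i k, k' = i + S k ->
     forall W y B W0, LSubT i W a' y -> LSubB k B W0 W ->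
     exists z L, LSubT i W0 a z /\ Permutation L (A ++ B) /\ LSubT (i + k) L z y) /\
  (forall k' A a a', LSubB k' A a a' -> forall i k, k' = i + S k ->
     forall W y B W0, LSubB i W a' y -> LSubB k B W0 W ->
     exists z L, LSubB i W0 a z /\ Permutation L (A ++ B) /\ LSubB (i + k) L z y) /\
  (forall k' A a a', LSubV k' A a a' -> forall i k, k' = i + S k ->
     forall W y B W0, LSubV i W a' y -> LSubB k B W0 W ->
     exists z L, LSubV i W0 a z /\ Permutation L (A ++ B) /\ LSubV (i + k) L z y).
Proof.
  apply LSub_mutind.
  - intros k' A1 A2 s s' r r' _ IH1 _ IH2 i k -> W y B W0 Hy HB.
    apply LSubT_app_inv in Hy as (W1 & W2 & y1 & y2 & -> & -> & Hy1 & Hy2).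
    apply LSubB_app_inv_r in HB as (B1 & B2 & W01 & W02 & -> & -> & HB1 & HB2).
    destruct (IH1 i k eq_refl _ _ _ _ Hy1 HB1) as (z1 & L1 & Hz1 & P1 & Hl1).
    destruct (IH2 i k eq_refl _ _ _ _ Hy2 HB2) as (z2 & L2 & Hz2 & P2 & Hl2).
    exists (RApp z1 z2), (L1 ++ L2). repeat split; try constructor; auto.
    eapply Permutation_trans; [apply Permutation_app; eauto|apply perm_app_swap_middle].
  - intros k' A b b' _ IH i k -> W y B W0 Hy HB.
    apply LSubT_bag_inv in Hy as (y' & -> & Hy).
    destruct (IH i k eq_refl _ _ _ _ Hy HB) as (z & L & Hz & P & Hl).
    exists (RBag z), L. repeat split; try constructor; auto.
  - intros k' i k -> W y B W0 Hy HB.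
    apply LSubB_nil_inv in Hy as [-> ->]. apply LSubB_nil_inv_r in HB as [-> ->].
    exists [], []. repeat constructor.
  - intros k' A1 A2 v v' b b' _ IH1 _ IH2 i k -> W y B W0 Hy HB.
    apply LSubB_cons_inv in Hy as (W1 & W2 & y1 & y2 & -> & -> & Hy1 & Hy2).
    apply LSubB_app_inv_r in HB as (B1 & B2 & W01 & W02 & -> & -> & HB1 & HB2).
    destruct (IH1 i k eq_refl _ _ _ _ Hy1 HB1) as (z1 & L1 & Hz1 & P1 & Hl1).
    destruct (IH2 i k eq_refl _ _ _ _ Hy2 HB2) as (z2 & L2 & Hz2 & P2 & Hl2).
    exists (z1 :: z2), (L1 ++ L2). repeat split; try constructor; auto.
    eapply Permutation_trans; [apply Permutation_app; eauto|apply perm_app_swap_middle].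
  - intros k' j Hj i k -> W y B W0 Hy HB.
    eapply LSub_subst_var; eauto. apply LS_lt. auto.
  - intros k' j Hj i k -> W y B W0 Hy HB.
    eapply LSub_subst_var; eauto. apply LS_gt. auto.
  - intros k' a i k -> W y B W0 Hy HB.
    eapply LSub_subst_var; eauto. apply LS_hit.
  - intros k' A t t' _ IH i k -> W y B W0 Hy HB.
    apply LSubV_lam_inv in Hy as (y' & -> & Hy).
    destruct (IH (S i) k eq_refl _ _ _ _ Hy HB) as (z & L & Hz & P & Hl).
    exists (RLam z), L. repeat split; try constructor; auto.
Qed.

Lemma LSub_subst_inv :
  (forall i W0 a z, LSubT i W0 a z -> forall k L y, LSubT (i + k) L z y ->
     exists A B W a', Permutation L (A ++ B) /\ LSubT (i + S k) A a a' /\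
       LSubB k B W0 W /\ LSubT i W a' y) /\
  (forall i W0 a z, LSubB i W0 a z -> forall k L y, LSubB (i + k) L z y ->
     exists A B W a', Permutation L (A ++ B) /\ LSubB (i + S k) A a a' /\
       LSubB k B W0 W /\ LSubB i W a' y) /\
  (forall i W0 a z, LSubV i W0 a z -> forall k L y, LSubV (i + k) L z y ->
     exists A B W a', Permutation L (A ++ B) /\ LSubV (i + S k) A a a' /\
       LSubB k B W0 W /\ LSubV i W a' y).
Proof.
  apply LSub_mutind.
  - intros i W01 W02 s s' r r' _ IH1 _ IH2 k L y Hy.
    apply LSubT_app_inv in Hy as (L1 & L2 & y1 & y2 & -> & -> & Hy1 & Hy2).
    destruct (IH1 _ _ _ Hy1) as (A1 & B1 & W1 & a1 & P1 & Ha1 & HB1 & Hw1).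
    destruct (IH2 _ _ _ Hy2) as (A2 & B2 & W2 & a2 & P2 & Ha2 & HB2 & Hw2).
    exists (A1 ++ A2), (B1 ++ B2), (W1 ++ W2), (RApp a1 a2). repeat split.
    + eapply Permutation_trans; [apply Permutation_app; eauto|apply perm_app_swap_middle].
    + constructor; auto.
    + apply LSubB_app; auto.
    + constructor; auto.
  - intros i W0 b b' _ IH k L y Hy.
    apply LSubT_bag_inv in Hy as (y' & -> & Hy).
    destruct (IH _ _ _ Hy) as (A & B & W & a & P & Ha & HB & Hw).
    exists A, B, W, (RBag a). repeat split; try constructor; auto.
  - intros i k L y Hy. apply LSubB_nil_inv in Hy as [-> ->].
    exists [], [], [], []. repeat constructor.
  - intros i W01 W02 v v' b b' _ IH1 _ IH2 k L y Hy.
    apply LSubB_cons_inv in Hy as (L1 & L2 & y1 & y2 & -> & -> & Hy1 & Hy2).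
    destruct (IH1 _ _ _ Hy1) as (A1 & B1 & W1 & a1 & P1 & Ha1 & HB1 & Hw1).
    destruct (IH2 _ _ _ Hy2) as (A2 & B2 & W2 & a2 & P2 & Ha2 & HB2 & Hw2).
    exists (A1 ++ A2), (B1 ++ B2), (W1 ++ W2), (a1 :: a2). repeat split.
    + eapply Permutation_trans; [apply Permutation_app; eauto|apply perm_app_swap_middle].
    + constructor; auto.
    + apply LSubB_app; auto.
    + constructor; auto.
  - intros i j Hj k L y Hy. apply LSub_subst_var_inv with (RVar j); auto. apply LS_lt. auto.
  - intros i j Hj k L y Hy. apply LSub_subst_var_inv with (RVar (pred j)); auto. apply LS_gt. auto.
  - intros i w0 k L y Hy. apply LSub_subst_var_inv with (shift i w0); auto. apply LS_hit.
  - intros i W0 t t' _ IH k L y Hy.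
    apply LSubV_lam_inv in Hy as (y' & -> & Hy).
    destruct (IH k L y' Hy) as (A & B & W & a & P & Ha & HB & Hw).
    exists A, B, W, (RLam a). repeat split; try constructor; auto.
Qed.

(** * Termination *)

Definition size_weight_lt (s1 w1 s2 w2 : nat) : Prop := s1 < s2 \/ (s1 = s2 /\ w1 < w2).

Lemma rstep_size_weight :
  (forall e E, rstep e E -> forall y, E y ->
     size_weight_lt (tsize y) (tweight y) (tsize e) (tweight e)) /\
  (forall v V, vstep v V -> forall w, V w ->
     size_weight_lt (vsize w) (vweight w) (vsize v) (vweight v)).
Proof.
  pose proof weight_ge2 as [Wt Wv].
  apply step_mutind; unfold size_weight_lt; intros.
  - destruct H as (W & HP & HL).
    pose proof ((proj1 LSub_size) _ _ _ _ HL) as Hs.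
    rewrite <- (Permutation_list_sum (Permutation_map vsize HP)) in Hs.
    apply Permutation_length in HP. cbn -[list_sum].
    rewrite !list_sum_cons, !list_sum_nil. lia.
  - contradiction.
  - subst y. right. cbn -[list_sum]. rewrite !list_sum_cons, !list_sum_nil.
    destruct (proj1 size_weight_lift s2 0).
    pose proof (Wt t). pose proof (Wt s1). pose proof (Wt s2). split; nia.
  - subst y. right. cbn -[list_sum]. rewrite !list_sum_cons, !list_sum_nil.
    destruct (proj2 size_weight_lift v 0).
    pose proof (Wt t). pose proof (Wt s). pose proof (Wv v). split; nia.
  - destruct H1 as (s' & Hs & ->). specialize (H0 _ Hs). simpl. pose proof (Wt t). nia.
  - destruct H1 as (t' & Ht & ->). specialize (H0 _ Ht). simpl. pose proof (Wt s). nia.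
  - destruct H1 as (v' & Hv & ->). specialize (H0 _ Hv). cbn -[list_sum].
    rewrite !map_app, !list_sum_app. cbn [map]. rewrite !list_sum_cons. lia.
  - destruct H1 as (t' & Ht & ->). specialize (H0 _ Ht). simpl. lia.
Qed.

Lemma weight_le_pow : (forall t, tweight t <= 4 ^ tsize t) /\ (forall v, vweight v <= 4 ^ vsize v).
Proof.
  apply rterm_rval_ind; intros; cbn [tweight tsize vweight vsize].
  - rewrite Nat.pow_succ_r', Nat.pow_add_r. nia.
  - enough (2 + list_sum (map vweight b) <= 4 ^ S (list_sum (map vsize b))) by lia.
    induction H as [|x l Hx Hl IHl]; cbn [map]; rewrite ?list_sum_cons, ?list_sum_nil.
    + simpl. lia.
    + assert (4 <= 4 ^ vsize x).
      { replace 4 with (4 ^ 1) at 1 by reflexivity.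
        apply Nat.pow_le_mono_r; [lia|destruct x; simpl; lia]. }
      assert (1 <= 4 ^ list_sum (map vsize l)) by (apply Nat.neq_0_lt_0, Nat.pow_nonzero; lia).
      rewrite Nat.pow_succ_r' in IHl |- *. rewrite Nat.pow_add_r. nia.
  - simpl. lia.
  - rewrite Nat.pow_succ_r'. lia.
Qed.

(* The lexicographic (size, weight) order, embedded in [nat]. *)
Definition rmeasure (t : rterm) : nat := 2 * 4 ^ tsize t + tweight t.

Lemma rmeasure_lt a b :
  size_weight_lt (tsize a) (tweight a) (tsize b) (tweight b) -> rmeasure a < rmeasure b.
Proof.
  unfold rmeasure. intros [H|[H1 H2]]; [|rewrite H1; lia].
  pose proof ((proj1 weight_le_pow) a).
  assert (4 ^ S (tsize a) <= 4 ^ tsize b) by (apply Nat.pow_le_mono_r; lia).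
  assert (1 <= 4 ^ tsize a) by (apply Nat.neq_0_lt_0, Nat.pow_nonzero; lia).
  rewrite Nat.pow_succ_r' in *. lia.
Qed.

Lemma rstep_rmeasure e E : rstep e E -> forall y, E y -> rmeasure y < rmeasure e.
Proof. intros. apply rmeasure_lt. eapply (proj1 rstep_size_weight); eauto. Qed.

Lemma rmeasure_app_l s t : rmeasure s < rmeasure (RApp s t).
Proof. apply rmeasure_lt. left. simpl. lia. Qed.

Lemma rmeasure_app_r s t : rmeasure t < rmeasure (RApp s t).
Proof. apply rmeasure_lt. left. simpl. lia. Qed.

Lemma rmeasure_bag_lam b1 t b2 : rmeasure t < rmeasure (RBag (b1 ++ RLam t :: b2)).
Proof.
  apply rmeasure_lt. left. cbn -[list_sum].
  rewrite map_app, list_sum_app. cbn [map]. rewrite list_sum_cons. simpl. lia.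
Qed.


(** * Reduction commutes with lifting and linear substitution *)

Definition seteq {A} (X Y : A -> Prop) : Prop := forall y, X y <-> Y y.

Definition image {A B} (f : A -> B) (X : A -> Prop) : B -> Prop :=
  fun y => exists x, X x /\ y = f x.

Lemma seteq_image_comp {A B C} (f : B -> C) (g : A -> B) X Y Z :
  seteq Y (image g X) -> seteq Z (image f Y) -> seteq Z (image (fun x => f (g x)) X).
Proof.
  intros HY HZ y. rewrite (HZ y). split.
  - intros (x & Hx & ->). apply HY in Hx as (x' & Hx' & ->). exists x'. auto.
  - intros (x & Hx & ->). exists (g x). split; auto. apply HY. exists x. auto.
Qed.

Lemma rstep_lift :
  (forall t T, rstep t T -> forall c, exists X, rstep (tlift c t) X /\ seteq X (image (tlift c) T)) /\
  (forall v V, vstep v V -> forall c, exists X, vstep (vlift c v) X /\ seteq X (image (vlift c) V)).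
Proof.
  apply step_mutind; intros; simpl.
  - eexists. split; [apply St_beta|]. intro y. split.
    + intros (W & HP & HL). apply Permutation_sym in HP.
      destruct (Permutation_map_inv _ _ HP) as (W' & -> & HP').
      rewrite <- (Nat.sub_0_r c) in HL at 1.
      destruct (LSubT_lift_high_inv 0 W' t c y ltac:(lia) HL) as (u & -> & Hu).
      exists u. split; auto. exists W'. auto.
    + intros (t' & (W & HP & HL) & ->). exists (map (vlift c) W).
      split; [apply Permutation_map; auto|].
      pose proof ((proj1 LSub_lift_high) _ _ _ _ HL c ltac:(lia)). rewrite Nat.sub_0_r in H. auto.
  - exists (fun _ => False). split; [apply St_zero; rewrite length_map; auto|].
    intro y. split; [intros []|intros (? & [] & _)].
  - eexists. split; [apply St_sigma1|].
    assert (E : tlift c (RApp (RBag [RLam (RApp t (tlift 0 s2))]) s1)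
              = RApp (RBag [RLam (RApp (tlift (S c) t) (tlift 0 (tlift c s2)))]) (tlift c s1))
      by (simpl; rewrite (proj1 lift_comm) by lia; reflexivity).
    intro y. split; [intros ->; eexists; eauto|intros (? & -> & ->); auto].
  - eexists. split; [apply St_sigma3|].
    assert (E : tlift c (RApp (RBag [RLam (RApp (RBag [vlift 0 v]) t)]) s)
              = RApp (RBag [RLam (RApp (RBag [vlift 0 (vlift c v)]) (tlift (S c) t))]) (tlift c s))
      by (simpl; rewrite (proj2 lift_comm) by lia; reflexivity).
    intro y. split; [intros ->; eexists; eauto|intros (? & -> & ->); auto].
  - destruct (H0 c) as (X & HX & EX). eexists. split; [apply (St_appL _ _ _ HX)|].
    intro y. split.
    + intros (x & Hx & ->). apply EX in Hx as (s' & Hs & ->). exists (RApp s' t). eauto.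
    + intros (? & (s' & Hs & ->) & ->). exists (tlift c s'). split; auto. apply EX. eexists; eauto.
  - destruct (H0 c) as (X & HX & EX). eexists. split; [apply (St_appR _ _ _ HX)|].
    intro y. split.
    + intros (x & Hx & ->). apply EX in Hx as (t' & Ht & ->). exists (RApp s t'). eauto.
    + intros (? & (t' & Ht & ->) & ->). exists (tlift c t'). split; auto. apply EX. eexists; eauto.
  - destruct (H0 c) as (X & HX & EX). rewrite map_app. eexists. split; [apply (St_bag _ _ _ _ HX)|].
    intro y. split.
    + intros (x & Hx & ->). apply EX in Hx as (v' & Hv & ->).
      exists (RBag (b1 ++ v' :: b2)). split; eauto. simpl. rewrite map_app. reflexivity.
    + intros (? & (v' & Hv & ->) & ->). exists (vlift c v').
      split; [apply EX; eexists; eauto|]. simpl. rewrite map_app. reflexivity.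
  - destruct (H0 (S c)) as (X & HX & EX). eexists. split; [apply (St_lam _ _ HX)|].
    intro y. split.
    + intros (x & Hx & ->). apply EX in Hx as (t' & Ht & ->). exists (RLam t'). eauto.
    + intros (? & (t' & Ht & ->) & ->). exists (tlift (S c) t'). split; auto. apply EX. eexists; eauto.
Qed.

Lemma vstep_shift n v V : vstep v V -> exists X, vstep (shift n v) X /\ seteq X (image (shift n) V).
Proof.
  intro H. induction n.
  - exists V. split; auto. intro y. split; [intro; exists y; auto|intros (? & ? & ->); auto].
  - destruct IHn as (X & HX & EX).
    destruct ((proj2 rstep_lift) _ _ HX 0) as (Y & HY & EY).
    exists Y. split; auto. exact (seteq_image_comp (vlift 0) (shift n) V X Y EX EY).
Qed.

Lemma LSubT_single_bag k vs v v' : LSubV k vs v v' -> LSubT k vs (RBag [v]) (RBag [v']).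
Proof. intros. constructor. apply LSubB_single. auto. Qed.

Lemma LSubT_single_bag_inv k vs v y : LSubT k vs (RBag [v]) y ->
  exists v', y = RBag [v'] /\ LSubV k vs v v'.
Proof.
  intro H. apply LSubT_bag_inv in H as (x' & -> & H).
  apply LSubB_single_inv in H as (v' & -> & Hv). eauto.
Qed.

Lemma LSubT_lam_bag k vs a a' : LSubT (S k) vs a a' -> LSubT k vs (RBag [RLam a]) (RBag [RLam a']).
Proof. intros. apply LSubT_single_bag. constructor. auto. Qed.

Lemma LSubT_lam_bag_inv k vs a y : LSubT k vs (RBag [RLam a]) y ->
  exists a', y = RBag [RLam a'] /\ LSubT (S k) vs a a'.
Proof.
  intro H. apply LSubT_single_bag_inv in H as (v' & -> & Hv).
  apply LSubV_lam_inv in Hv as (a' & -> & Ha). eauto.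
Qed.

Lemma perm_app_swap_r {A} (a b c : list A) : Permutation ((a ++ b) ++ c) ((a ++ c) ++ b).
Proof. rewrite <- !app_assoc. apply Permutation_app_head, Permutation_app_comm. Qed.

Definition LSub_step_fwd (t : rterm) (T : rterm -> Prop) : Prop :=
  forall k vs u, LSubT k vs t u -> exists U, rstep u U /\
    forall y, U y -> exists t' vs', T t' /\ Permutation vs vs' /\ LSubT k vs' t' y.

Definition LSub_step_bwd (t : rterm) (T : rterm -> Prop) : Prop :=
  forall k t' vs' y, T t' -> LSubT k vs' t' y ->
    exists vs u U, Permutation vs' vs /\ LSubT k vs t u /\ rstep u U /\ U y.

Lemma LSub_step_fwd_beta a ws : LSub_step_fwd (RApp (RBag [RLam a]) (RBag ws)) (lin_subst a ws).
Proof.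
  intros k vs u Hu.
  apply LSubT_app_inv in Hu as (A & B & x & y & -> & -> & Hx & Hw).
  apply LSubT_lam_bag_inv in Hx as (a' & -> & Ha). apply LSubT_bag_inv in Hw as (ws' & -> & Hw).
  eexists. split; [apply St_beta|]. intros y (W & HP & HL).
  destruct (LSubB_perm_r _ _ _ _ _ Hw HP) as (B' & W0 & P1 & P2 & HB).
  destruct ((proj1 LSub_subst) _ _ _ _ Ha 0 k eq_refl _ _ _ _ HL HB) as (z & L & Hz & PL & HzL).
  exists z, L. repeat split; [exists W0; auto| |auto].
  eapply Permutation_trans; [apply Permutation_app_head, P1|apply Permutation_sym, PL].
Qed.

Lemma LSub_step_fwd_zero b t : length b <> 1 -> LSub_step_fwd (RApp (RBag b) t) (fun _ => False).
Proof.
  intros Hb k vs u Hu.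
  apply LSubT_app_inv in Hu as (X & Y & x & y & -> & -> & Hx & Hy).
  apply LSubT_bag_inv in Hx as (b' & -> & Hx).
  exists (fun _ => False). split; [|intros _ []].
  apply St_zero. apply LSubB_length in Hx. congruence.
Qed.

Lemma LSub_step_fwd_sigma1 a s1 s2 : LSub_step_fwd (RApp (RApp (RBag [RLam a]) s1) s2)
  (fun u => u = RApp (RBag [RLam (RApp a (tlift 0 s2))]) s1).
Proof.
  intros k vs u Hu.
  apply LSubT_app_inv in Hu as (X & V2 & x & s2' & -> & -> & Hx & H2).
  apply LSubT_app_inv in Hx as (VA & V1 & x0 & s1' & -> & -> & Hx0 & H1).
  apply LSubT_lam_bag_inv in Hx0 as (a' & -> & Ha).
  eexists. split; [apply St_sigma1|]. intros y ->.
  eexists. exists ((VA ++ V2) ++ V1). repeat split; [apply perm_app_swap_r|].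
  constructor; auto. apply LSubT_lam_bag. constructor; auto.
  apply (proj1 LSub_lift_low); auto. lia.
Qed.

Lemma LSub_step_fwd_sigma3 v a s : LSub_step_fwd (RApp (RBag [v]) (RApp (RBag [RLam a]) s))
  (fun u => u = RApp (RBag [RLam (RApp (RBag [vlift 0 v]) a)]) s).
Proof.
  intros k vs u Hu.
  apply LSubT_app_inv in Hu as (X & Z & x & z & -> & -> & Hx & Hz).
  apply LSubT_single_bag_inv in Hx as (v' & -> & Hv).
  apply LSubT_app_inv in Hz as (Y & V3 & x & s' & -> & -> & Hx & H3).
  apply LSubT_lam_bag_inv in Hx as (a' & -> & Ha).
  eexists. split; [apply St_sigma3|]. intros y ->.
  eexists. exists ((X ++ Y) ++ V3). repeat split; [rewrite app_assoc; reflexivity|].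
  constructor; auto. apply LSubT_lam_bag. constructor; auto.
  apply LSubT_single_bag. apply (proj2 (proj2 LSub_lift_low)); auto. lia.
Qed.

Lemma rstep_LSub :
  (forall t T, rstep t T -> LSub_step_fwd t T) /\
  (forall v V, vstep v V -> forall k vs u, LSubV k vs v u -> exists U, vstep u U /\
     forall y, U y -> exists v' vs', V v' /\ Permutation vs vs' /\ LSubV k vs' v' y).
Proof.
  apply step_mutind.
  - apply LSub_step_fwd_beta.
  - apply LSub_step_fwd_zero.
  - apply LSub_step_fwd_sigma1.
  - apply LSub_step_fwd_sigma3.
  - intros s r S _ IH k vs u Hu.
    apply LSubT_app_inv in Hu as (V1 & V2 & s' & r' & -> & -> & Hs & Hr).
    destruct (IH _ _ _ Hs) as (U & HU & EU).
    eexists. split; [apply (St_appL _ _ _ HU)|]. intros y (x & Hx & ->).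
    destruct (EU _ Hx) as (s0 & V1' & HS & P & HL).
    exists (RApp s0 r), (V1' ++ V2). repeat split; eauto using Permutation_app_tail.
    constructor; auto.
  - intros s r S _ IH k vs u Hu.
    apply LSubT_app_inv in Hu as (V1 & V2 & s' & r' & -> & -> & Hs & Hr).
    destruct (IH _ _ _ Hr) as (U & HU & EU).
    eexists. split; [apply (St_appR _ _ _ HU)|]. intros y (x & Hx & ->).
    destruct (EU _ Hx) as (s0 & V2' & HS & P & HL).
    exists (RApp s s0), (V1 ++ V2'). repeat split; eauto using Permutation_app_head.
    constructor; auto.
  - intros b1 v b2 V _ IH k vs u Hu.
    apply LSubT_bag_inv in Hu as (c & -> & Hc).
    apply LSubB_app_inv in Hc as (B1 & B2 & c1 & c2 & -> & -> & H1 & H2).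
    apply LSubB_cons_inv in H2 as (Bv & Bb & w & c3 & -> & -> & Hv & Hb).
    destruct (IH _ _ _ Hv) as (U & HU & EU).
    eexists. split; [apply (St_bag _ _ _ _ HU)|]. intros y (x & Hx & ->).
    destruct (EU _ Hx) as (v0 & Bv' & HV & P & HL).
    exists (RBag (b1 ++ v0 :: b2)), (B1 ++ Bv' ++ Bb). repeat split; eauto.
    + apply Permutation_app_head, Permutation_app_tail. auto.
    + constructor. apply LSubB_app; auto. constructor; auto.
  - intros t T _ IH k vs u Hu. apply LSubV_lam_inv in Hu as (t' & -> & Ht).
    destruct (IH _ _ _ Ht) as (U & HU & EU).
    eexists. split; [apply (St_lam _ _ HU)|]. intros y (x & Hx & ->).
    destruct (EU _ Hx) as (t0 & vs' & HT & P & HL).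
    exists (RLam t0), vs'. repeat split; eauto. constructor; auto.
Qed.

Lemma LSub_step_bwd_beta a ws : LSub_step_bwd (RApp (RBag [RLam a]) (RBag ws)) (lin_subst a ws).
Proof.
  intros k t' vs' y (W0 & HP & HL) Hy.
  destruct ((proj1 LSub_subst_inv) _ _ _ _ HL k vs' y Hy) as (A & B & W & a' & P1 & Ha & HB & Hw).
  destruct (LSubB_perm_l _ _ _ _ ws HB (Permutation_sym HP)) as (B' & W' & P2 & P3 & HB').
  exists (A ++ B'), (RApp (RBag [RLam a']) (RBag W')). eexists. repeat split.
  + eapply Permutation_trans; [apply P1|apply Permutation_app_head; auto].
  + constructor; [apply LSubT_lam_bag|constructor]; auto.
  + apply St_beta.
  + exists W. split; auto. apply Permutation_sym; auto.
Qed.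

Lemma LSub_step_bwd_sigma1 a s1 s2 : LSub_step_bwd (RApp (RApp (RBag [RLam a]) s1) s2)
  (fun u => u = RApp (RBag [RLam (RApp a (tlift 0 s2))]) s1).
Proof.
  intros k t' vs' y -> Hy.
  apply LSubT_app_inv in Hy as (X & V1 & x & s1' & -> & -> & Hx & H1).
  apply LSubT_lam_bag_inv in Hx as (z & -> & Hz).
  apply LSubT_app_inv in Hz as (VA & V2 & a' & q & -> & -> & Ha & Hq).
  destruct (LSubT_lift_low_inv k V2 s2 0 q ltac:(lia) Hq) as (s2' & -> & H2).
  exists ((VA ++ V1) ++ V2), (RApp (RApp (RBag [RLam a']) s1') s2'). eexists.
  repeat split; [apply perm_app_swap_r| |apply St_sigma1|reflexivity].
  constructor; auto. constructor; auto. apply LSubT_lam_bag; auto.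
Qed.

Lemma LSub_step_bwd_sigma3 v a s : LSub_step_bwd (RApp (RBag [v]) (RApp (RBag [RLam a]) s))
  (fun u => u = RApp (RBag [RLam (RApp (RBag [vlift 0 v]) a)]) s).
Proof.
  intros k t' vs' y -> Hy.
  apply LSubT_app_inv in Hy as (X & V3 & x & s' & -> & -> & Hx & H3).
  apply LSubT_lam_bag_inv in Hx as (z & -> & Hz).
  apply LSubT_app_inv in Hz as (VV & VA & x & a' & -> & -> & Hx & Ha).
  apply LSubT_single_bag_inv in Hx as (w & -> & Hw).
  destruct (LSubV_lift_low_inv k VV v 0 w ltac:(lia) Hw) as (v' & -> & Hv).
  exists (VV ++ VA ++ V3), (RApp (RBag [v']) (RApp (RBag [RLam a']) s')). eexists.
  repeat split; [rewrite app_assoc; reflexivity| |apply St_sigma3|reflexivity].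
  constructor; [apply LSubT_single_bag; auto|]. constructor; auto. apply LSubT_lam_bag; auto.
Qed.

Lemma rstep_LSub_inv :
  (forall t T, rstep t T -> LSub_step_bwd t T) /\
  (forall v V, vstep v V -> forall k v' vs' y, V v' -> LSubV k vs' v' y ->
     exists vs u U, Permutation vs' vs /\ LSubV k vs v u /\ vstep u U /\ U y).
Proof.
  apply step_mutind.
  - apply LSub_step_bwd_beta.
  - intros b t Hb k t' vs' y [].
  - apply LSub_step_bwd_sigma1.
  - apply LSub_step_bwd_sigma3.
  - intros s r S _ IH k t' vs' y (s0 & HS & ->) Hy.
    apply LSubT_app_inv in Hy as (V1 & V2 & y1 & y2 & -> & -> & H1 & H2).
    destruct (IH _ _ _ _ HS H1) as (V1' & u & U & P & Hu & HU & Uy).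
    exists (V1' ++ V2), (RApp u y2). eexists.
    repeat split; [apply Permutation_app_tail; auto|constructor; auto|apply (St_appL _ _ _ HU)|].
    simpl. eauto.
  - intros s r S _ IH k t' vs' y (s0 & HS & ->) Hy.
    apply LSubT_app_inv in Hy as (V1 & V2 & y1 & y2 & -> & -> & H1 & H2).
    destruct (IH _ _ _ _ HS H2) as (V2' & u & U & P & Hu & HU & Uy).
    exists (V1 ++ V2'), (RApp y1 u). eexists.
    repeat split; [apply Permutation_app_head; auto|constructor; auto|apply (St_appR _ _ _ HU)|].
    simpl. eauto.
  - intros b1 v b2 V _ IH k t' vs' y (v0 & HV & ->) Hy.
    apply LSubT_bag_inv in Hy as (c & -> & Hc).
    apply LSubB_app_inv in Hc as (B1 & B2 & c1 & c2 & -> & -> & H1 & H2).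
    apply LSubB_cons_inv in H2 as (Bv & Bb & w & c3 & -> & -> & Hv & Hb).
    destruct (IH _ _ _ _ HV Hv) as (Bv' & u & U & P & Hu & HU & Uy).
    exists (B1 ++ Bv' ++ Bb), (RBag (c1 ++ u :: c3)). eexists. repeat split.
    + apply Permutation_app_head, Permutation_app_tail. auto.
    + constructor. apply LSubB_app; auto. constructor; auto.
    + apply (St_bag _ _ _ _ HU).
    + simpl. eauto.
  - intros t T _ IH k v' vs' y (t0 & HT & ->) Hy.
    apply LSubV_lam_inv in Hy as (y' & -> & Hy).
    destruct (IH _ _ _ _ HT Hy) as (vs & u & U & P & Hu & HU & Uy).
    exists vs, (RLam u), (fun w => exists t', U t' /\ w = RLam t').
    split; [|split; [|split]]; [auto|constructor; auto|apply (St_lam _ _ HU)|simpl; eauto].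
Qed.

Lemma LSubT_app_split k vs1 vs2 s r y : LSubT k (vs1 ++ vs2) (RApp s r) y ->
  length vs1 = tocc k s -> exists s' r', y = RApp s' r' /\ LSubT k vs1 s s' /\ LSubT k vs2 r r'.
Proof.
  intros H Hl. apply LSubT_app_inv in H as (X1 & X2 & s' & r' & E & -> & H1 & H2).
  destruct (app_inj_length _ _ _ _ E) as [-> ->]; eauto.
  rewrite Hl. symmetry. apply ((proj1 LSub_length) _ _ _ _ H1).
Qed.

Lemma LSubB_cons_split k vs1 vs2 a b c : LSubB k (vs1 ++ vs2) (a :: b) c ->
  length vs1 = vocc k a -> exists a' b', c = a' :: b' /\ LSubV k vs1 a a' /\ LSubB k vs2 b b'.
Proof.
  intros H Hl. apply LSubB_cons_inv in H as (X1 & X2 & a' & b' & E & -> & H1 & H2).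
  destruct (app_inj_length _ _ _ _ E) as [-> ->]; eauto.
  rewrite Hl. symmetry. apply ((proj2 (proj2 LSub_length)) _ _ _ _ H1).
Qed.

Lemma app_eq_app_cons {A} (l1 l2 a b : list A) x : l1 ++ l2 = a ++ x :: b ->
  (exists m, l1 = a ++ x :: m /\ b = m ++ l2) \/ (exists n, l2 = n ++ x :: b /\ a = l1 ++ n).
Proof.
  intro E. apply app_eq_app in E as (l & [[-> E]|[-> ->]]); [|eauto].
  destruct l as [|y m]; simpl in E.
  - right. exists []. rewrite !app_nil_r. auto.
  - injection E as -> ->. left. eauto.
Qed.

Definition LSubT_arg_step k vs t u := forall vsa v vsb, vs = vsa ++ v :: vsb ->
  forall V, vstep v V -> exists U, rstep u U /\
    (forall y, U y -> exists v', V v' /\ LSubT k (vsa ++ v' :: vsb) t y) /\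
    (forall v' y, V v' -> LSubT k (vsa ++ v' :: vsb) t y -> U y).

Definition LSubB_arg_step k vs b c := forall vsa v vsb, vs = vsa ++ v :: vsb ->
  forall V, vstep v V -> forall pre post, exists U, rstep (RBag (pre ++ c ++ post)) U /\
    (forall y, U y -> exists v' c', V v' /\ y = RBag (pre ++ c' ++ post) /\
                                    LSubB k (vsa ++ v' :: vsb) b c') /\
    (forall v' c', V v' -> LSubB k (vsa ++ v' :: vsb) b c' -> U (RBag (pre ++ c' ++ post))).

Definition LSubV_arg_step k vs a w := forall vsa v vsb, vs = vsa ++ v :: vsb ->
  forall V, vstep v V -> exists U, vstep w U /\
    (forall y, U y -> exists v', V v' /\ LSubV k (vsa ++ v' :: vsb) a y) /\
    (forall v' y, V v' -> LSubV k (vsa ++ v' :: vsb) a y -> U y).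

Lemma LSubT_arg_step_app k vs1 vs2 s s' r r' :
  LSubT k vs1 s s' -> LSubT_arg_step k vs1 s s' -> LSubT k vs2 r r' -> LSubT_arg_step k vs2 r r' ->
  LSubT_arg_step k (vs1 ++ vs2) (RApp s r) (RApp s' r').
Proof.
intros Hs IH1 Hr IH2 vsa v vsb E V HV.
  pose proof ((proj1 LSub_length) _ _ _ _ Hs) as Ls.
  destruct (app_eq_app_cons _ _ _ _ _ E) as [(m & -> & ->)|(n & -> & ->)].
  + destruct (IH1 vsa v m eq_refl V HV) as (U & HU & F1 & F2).
    eexists. split; [apply (St_appL _ _ _ HU)|].
    split.
    * intros y (x & Hx & ->). destruct (F1 _ Hx) as (v' & HV' & Hl).
      exists v'. split; auto. rewrite app_comm_cons, app_assoc. constructor; auto.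
    * intros v' y HV' Hy. rewrite app_comm_cons, app_assoc in Hy.
      apply LSubT_app_split in Hy as (y1 & y2 & -> & H1 & H2);
        [|rewrite <- Ls, !length_app; reflexivity].
      rewrite ((proj1 LSub_functional) _ _ _ _ H2 _ Hr). eauto.
  + destruct (IH2 n v vsb eq_refl V HV) as (U & HU & F1 & F2).
    eexists. split; [apply (St_appR _ _ _ HU)|]. split.
    * intros y (x & Hx & ->). destruct (F1 _ Hx) as (v' & HV' & Hl).
      exists v'. split; auto. rewrite <- app_assoc. constructor; auto.
    * intros v' y HV' Hy. rewrite <- app_assoc in Hy.
      apply LSubT_app_split in Hy as (y1 & y2 & -> & H1 & H2); [|auto].
      rewrite ((proj1 LSub_functional) _ _ _ _ H1 _ Hs). eauto.
Qed.

Lemma LSubB_arg_step_cons k vs1 vs2 a a' b b' :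
  LSubV k vs1 a a' -> LSubV_arg_step k vs1 a a' -> LSubB k vs2 b b' -> LSubB_arg_step k vs2 b b' ->
  LSubB_arg_step k (vs1 ++ vs2) (a :: b) (a' :: b').
Proof.
intros Ha IH1 Hb IH2 vsa v vsb E V HV pre post.
  pose proof ((proj2 (proj2 LSub_length)) _ _ _ _ Ha) as La.
  destruct (app_eq_app_cons _ _ _ _ _ E) as [(m & -> & ->)|(n & -> & ->)].
  + destruct (IH1 vsa v m eq_refl V HV) as (U & HU & F1 & F2).
    eexists. split; [apply (St_bag _ _ _ _ HU)|]. split.
    * intros y (x & Hx & ->). destruct (F1 _ Hx) as (v' & HV' & Hl).
      exists v', (x :: b'). repeat split; auto.
      rewrite app_comm_cons, app_assoc. constructor; auto.
    * intros v' y HV' Hy. rewrite app_comm_cons, app_assoc in Hy.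
      apply LSubB_cons_split in Hy as (y1 & y2 & -> & H1 & H2);
        [|rewrite <- La, !length_app; reflexivity].
      rewrite ((proj1 (proj2 LSub_functional)) _ _ _ _ H2 _ Hb). eauto.
  + destruct (IH2 n v vsb eq_refl V HV (pre ++ [a']) post) as (U & HU & F1 & F2).
    rewrite <- app_assoc in HU. exists U. split; [exact HU|]. split.
    * intros y Uy. destruct (F1 _ Uy) as (v' & c' & HV' & -> & Hl).
      exists v', (a' :: c'). rewrite <- app_assoc. repeat split; auto.
      rewrite <- app_assoc. constructor; auto.
    * intros v' y HV' Hy. rewrite <- app_assoc in Hy.
      apply LSubB_cons_split in Hy as (y1 & y2 & -> & H1 & H2); [|auto].
      rewrite ((proj2 (proj2 LSub_functional)) _ _ _ _ H1 _ Ha).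
      specialize (F2 _ _ HV' H2). rewrite <- app_assoc in F2. exact F2.
Qed.

Lemma LSub_arg_step :
  (forall k vs t u, LSubT k vs t u -> LSubT_arg_step k vs t u) /\
  (forall k vs b c, LSubB k vs b c -> LSubB_arg_step k vs b c) /\
  (forall k vs a w, LSubV k vs a w -> LSubV_arg_step k vs a w).
Proof.
  apply LSub_mutind.
  - apply LSubT_arg_step_app.
  - intros k vs b c Hb IH vsa v vsb E V HV.
    destruct (IH vsa v vsb E V HV [] []) as (U & HU & F1 & F2).
    rewrite app_nil_r in HU. exists U. split; auto. split.
    + intros y Uy. destruct (F1 _ Uy) as (v' & c' & HV' & -> & Hl).
      exists v'. rewrite app_nil_r. split; auto. constructor. auto.
    + intros v' y HV' Hy. apply LSubT_bag_inv in Hy as (c' & -> & Hc').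
      specialize (F2 _ _ HV' Hc'). rewrite app_nil_r in F2. auto.
  - intros k vsa v vsb E. destruct vsa; discriminate.
  - apply LSubB_arg_step_cons.
  - intros k j Hj vsa v vsb E. destruct vsa; discriminate.
  - intros k j Hj vsa v vsb E. destruct vsa; discriminate.
  - intros k w vsa v vsb E V HV.
    destruct vsa as [|x [|]]; simpl in E; try discriminate. injection E as -> <-.
    destruct (vstep_shift k v V HV) as (X & HX & EX).
    exists X. split; [exact HX|]. split.
    + intros y Xy. apply EX in Xy as (v' & HV' & ->). exists v'. split; auto. apply LS_hit.
    + intros v' y HV' Hy. apply EX.
      apply LSubV_var_inv in Hy as [(H1 & _)|[(H1 & _)|(_ & w & E1 & ->)]]; try lia.
      injection E1 as ->. exists w. auto.
  - intros k vs t t' Ht IH vsa v vsb E V HV.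
    destruct (IH vsa v vsb E V HV) as (U & HU & F1 & F2).
    eexists. split; [apply (St_lam _ _ HU)|]. split.
    + intros y (x & Hx & ->). destruct (F1 _ Hx) as (v' & HV' & Hl).
      exists v'. split; auto. constructor; auto.
    + intros v' y HV' Hy. apply LSubV_lam_inv in Hy as (y' & -> & Hy). eauto.
Qed.

(** * Confluence *)

(* Normal forms reached by following a single reduct at each step, unlike
   the reduction [sred] of sets. *)
Inductive red_nf : rterm -> rterm -> Prop :=
| red_nf_normal : forall e, rnormal e -> red_nf e e
| red_nf_step : forall e E y u, rstep e E -> E y -> red_nf y u -> red_nf e u.

Definition set_nf (X : rterm -> Prop) (u : rterm) : Prop := exists x, X x /\ red_nf x u.

(* Confluence in the form needed here: no step from [e] loses a normal form. *)
Definition nf_stable (e : rterm) : Prop :=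
  forall E, rstep e E -> forall u, red_nf e u -> set_nf E u.

Inductive reduct : rterm -> rterm -> Prop :=
| reduct_refl : forall x, reduct x x
| reduct_step : forall x X y z, rstep x X -> X y -> reduct z y -> reduct z x.

Lemma reduct_rmeasure z x : reduct z x -> rmeasure z <= rmeasure x.
Proof.
  induction 1; auto.
  pose proof (rstep_rmeasure _ _ H _ H0). lia.
Qed.

Lemma red_nf_is_normal e u : red_nf e u -> rnormal u.
Proof. induction 1; auto. Qed.

Lemma red_nf_of_normal e u : rnormal e -> red_nf e u -> u = e.
Proof. intros Hn H. destruct H; auto. exfalso. apply Hn. eauto. Qed.

Lemma nf_stable_step_iff y Y : nf_stable y -> rstep y Y -> forall u, red_nf y u <-> set_nf Y u.
Proof.
  intros HU HY u. split; [intro; eapply HU; eauto|].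
  intros (x & Hx & Hn). eapply red_nf_step; eauto.
Qed.

Lemma set_nf_ext X Y : seteq X Y -> forall u, set_nf X u <-> set_nf Y u.
Proof. intros E u. split; intros (x & Hx & Hn); exists x; split; auto; apply E; auto. Qed.

Lemma set_nf_single x u : set_nf (fun z => z = x) u <-> red_nf x u.
Proof. split; [intros (? & -> & H); auto|intro; exists x; auto]. Qed.

Lemma nf_stable_step_set x X G : nf_stable x -> rstep x X -> seteq X G ->
  forall u, red_nf x u <-> set_nf G u.
Proof. intros. rewrite (nf_stable_step_iff x X H H0). apply set_nf_ext. auto. Qed.

Lemma nf_stable_step1 y Y y' : nf_stable y -> rstep y Y -> seteq Y (fun z => z = y') ->
  forall u, red_nf y u <-> red_nf y' u.
Proof. intros. rewrite (nf_stable_step_set _ _ _ H H0 H1). apply set_nf_single. Qed.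

Lemma set_nf_cover (Z G : rterm -> Prop) :
  (forall z, Z z -> nf_stable z /\ exists U, rstep z U /\ forall g, U g -> G g) ->
  (forall g, G g -> exists z U, Z z /\ rstep z U /\ U g) ->
  forall u, set_nf Z u <-> set_nf G u.
Proof.
  intros H1 H2 u. split.
  - intros (z & Hz & Hn). destruct (H1 _ Hz) as (HU & U & HS & HG).
    destruct (HU _ HS _ Hn) as (g & Hg & Hgn). exists g. auto.
  - intros (g & Hg & Hn). destruct (H2 _ Hg) as (z & U & Hz & HS & HUg).
    exists z. split; auto. eapply red_nf_step; eauto.
Qed.

Definition rctx (C : rterm -> rterm) : Prop :=
  forall x X, rstep x X -> exists Y, rstep (C x) Y /\ seteq Y (image C X).

Section Context.
Variable C : rterm -> rterm.
Hypothesis HC : rctx C.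

Lemma rctx_reduct z x : reduct z x -> reduct (C z) (C x).
Proof.
  induction 1; [constructor|].
  destruct (HC _ _ H) as (Y & HY & EY). apply (reduct_step _ Y (C y)); auto.
  apply EY. exists y. auto.
Qed.

Lemma rctx_red_nf x x' u : red_nf x x' -> red_nf (C x') u -> red_nf (C x) u.
Proof.
  induction 1; intros; auto.
  destruct (HC _ _ H) as (Y & HY & EY). apply (red_nf_step _ Y (C y)); auto.
  apply EY. exists y. auto.
Qed.

Lemma rctx_red_nf_iff x : (forall x', reduct x' x -> nf_stable (C x')) ->
  forall u, red_nf (C x) u <-> exists x', red_nf x x' /\ red_nf (C x') u.
Proof.
  intros HU u. split; [|intros (x' & H1 & H2); eapply rctx_red_nf; eauto].
  revert HU u. induction x as [x IH] using (well_founded_induction (well_founded_ltof _ rmeasure)).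
  intros HU u Hu.
  destruct (classic (exists X, rstep x X)) as [[X HX]|Hn].
  - destruct (HC _ _ HX) as (Y & HY & EY).
    destruct (HU x (reduct_refl _) _ HY _ Hu) as (y & Hy & Hyn).
    apply EY in Hy as (x' & Hx' & ->).
    destruct (IH x' (rstep_rmeasure _ _ HX _ Hx')) with (u := u) as (x'' & H1 & H2); auto.
    + intros x1 Hr. apply HU. eapply reduct_step; eauto.
    + exists x''. split; auto. eapply red_nf_step; eauto.
  - exists x. split; auto. constructor. auto.
Qed.
End Context.

Lemma rctx_app_l t : rctx (fun x => RApp x t).
Proof. intros x X H. eexists. split; [apply (St_appL _ _ _ H)|]. intro; reflexivity. Qed.

Lemma rctx_app_r s : rctx (fun x => RApp s x).
Proof. intros x X H. eexists. split; [apply (St_appR _ _ _ H)|]. intro; reflexivity. Qed.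

Lemma rctx_bag_lam b1 b2 : rctx (fun x => RBag (b1 ++ RLam x :: b2)).
Proof.
  intros x X H. eexists. split; [apply St_bag, (St_lam _ _ H)|].
  intro y. split.
  - intros (v' & (t' & Ht & ->) & ->). eexists; eauto.
  - intros (x' & Hx & ->). eexists; eauto.
Qed.

Lemma rctx_comp C1 C2 : rctx C1 -> rctx C2 -> rctx (fun x => C1 (C2 x)).
Proof.
  intros H1 H2 x X HX. destruct (H2 _ _ HX) as (Y2 & HY2 & E2).
  destruct (H1 _ _ HY2) as (Y1 & HY1 & E1). exists Y1. split; auto.
  exact (seteq_image_comp C1 C2 X Y2 Y1 E2 E1).
Qed.

Definition nf_stable_below (e : rterm) : Prop :=
  forall y, rmeasure y < rmeasure e -> nf_stable y.

Definition steps_onto (Z G : rterm -> Prop) : Prop :=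
  (forall z, Z z -> exists U, rstep z U /\ forall g, U g -> G g) /\
  (forall g, G g -> exists z U, Z z /\ rstep z U /\ U g).

Definition below (e : rterm) (E : rterm -> Prop) : Prop :=
  forall z, E z -> rmeasure z < rmeasure e.

Lemma below_seteq e Y E : rstep e Y -> seteq Y E -> below e E.
Proof. intros HY EY z Hz. apply (rstep_rmeasure _ _ HY). apply EY. auto. Qed.

Lemma set_nf_join e E1 E2 G : nf_stable_below e -> below e E1 -> below e E2 ->
  steps_onto E1 G -> steps_onto E2 G -> forall u, set_nf E1 u <-> set_nf E2 u.
Proof.
  intros IH H1 H2 [F1 C1] [F2 C2] u. transitivity (set_nf G u); [|symmetry];
    apply set_nf_cover; auto; intros z Hz; split; auto; apply IH; auto.
Qed.

Lemma steps_onto_single x X G : rstep x X -> seteq X G -> steps_onto (fun z => z = x) G.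
Proof.
  intros Hx E. split.
  - intros z ->. exists X. split; auto. apply E.
  - intros g Hg. exists x, X. repeat split; auto. apply E. auto.
Qed.

Lemma steps_onto_image {A} (C f : A -> rterm) (S : A -> Prop) :
  (forall s, S s -> rstep (C s) (fun y => y = f s)) -> steps_onto (image C S) (image f S).
Proof.
  intro H. split.
  - intros z (s & Hs & ->). eexists. split; [apply H, Hs|]. intros g ->. exists s. auto.
  - intros g (s & Hs & ->). exists (C s), (fun y => y = f s). repeat split; auto. exists s. auto.
Qed.

Lemma rstep_single_bag_inv v S : rstep (RBag [v]) S ->
  exists V, vstep v V /\ S = image (fun v' => RBag [v']) V.
Proof.
  intro H. inversion H as [| | | | | |b1 v0 b2 V HV E]; subst.
  apply app_eq_unit in E as [[-> [=-> ->]]|[_ [=]]]. eauto.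
Qed.

Lemma vstep_lam_inv a V : vstep (RLam a) V -> exists T, rstep a T /\ V = image RLam T.
Proof. intro H. inversion H; subst. eauto. Qed.

Lemma rstep_lam_bag_inv a S : rstep (RBag [RLam a]) S ->
  exists T, rstep a T /\ seteq S (image (fun t => RBag [RLam t]) T).
Proof.
  intro H. apply rstep_single_bag_inv in H as (V & HV & ->).
  apply vstep_lam_inv in HV as (T & HT & ->). exists T. split; auto.
  intro y. split.
  - intros (? & (t & Ht & ->) & ->). exists t. auto.
  - intros (t & Ht & ->). exists (RLam t). split; auto. exists t. auto.
Qed.

Lemma rstep_bag_inv b S : rstep (RBag b) S ->
  exists b1 v b2 V, b = b1 ++ v :: b2 /\ vstep v V /\ S = image (fun v' => RBag (b1 ++ v' :: b2)) V.
Proof. intro H. inversion H; subst. eauto 10. Qed.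

Lemma Permutation_elt_inv (l1 l2 W : list rval) v : Permutation (l1 ++ v :: l2) W ->
  exists c1 c2, W = c1 ++ v :: c2 /\ Permutation (l1 ++ l2) (c1 ++ c2).
Proof.
  intro H. destruct (Permutation_vs_elt_inv l1 l2 v (Permutation_sym H)) as (c1 & c2 & ->).
  exists c1, c2. split; auto. eapply Permutation_app_inv, H.
Qed.

Lemma peak_beta_fun a ws S : nf_stable_below (RApp (RBag [RLam a]) (RBag ws)) ->
  rstep (RBag [RLam a]) S ->
  forall u, set_nf (lin_subst a ws) u <-> set_nf (image (fun s => RApp s (RBag ws)) S) u.
Proof.
  intros IH HS. destruct (rstep_lam_bag_inv _ _ HS) as (T & HT & ES).
  apply (set_nf_join _ _ _ (fun g => exists t', T t' /\ lin_subst t' ws g) IH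
    (rstep_rmeasure _ _ (St_beta _ _)) (rstep_rmeasure _ _ (St_appL _ _ _ HS))); split.
  - intros z (W & HP & HL).
    destruct ((proj1 rstep_LSub) _ _ HT 0 W z HL) as (U & HU & EU). exists U. split; auto.
    intros g Ug. destruct (EU _ Ug) as (t' & W' & HT' & P & HL').
    exists t'. split; auto. exists W'. eauto using Permutation_trans.
  - intros g (t' & HT' & W' & HP' & HL').
    destruct ((proj1 rstep_LSub_inv) _ _ HT 0 t' W' g HT' HL') as (vs & z & U & P & Hz & HU & Ug).
    exists z, U. repeat split; auto. exists vs. eauto using Permutation_trans.
  - intros z (s' & Hs & ->). apply ES in Hs as (t' & HT' & ->).
    exists (lin_subst t' ws). split; [apply St_beta|]. intros g Hg. eauto.
  - intros g (t' & HT' & Hg). exists (RApp (RBag [RLam t']) (RBag ws)), (lin_subst t' ws).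
    repeat split; auto; [|apply St_beta].
    exists (RBag [RLam t']). split; auto. apply ES. exists t'. auto.
Qed.

Lemma peak_beta_arg a ws S : nf_stable_below (RApp (RBag [RLam a]) (RBag ws)) -> rstep (RBag ws) S ->
  forall u, set_nf (lin_subst a ws) u <-> set_nf (image (RApp (RBag [RLam a])) S) u.
Proof.
  intros IH HS. pose proof HS as HS'.
  apply rstep_bag_inv in HS' as (b1 & v & b2 & V & -> & HV & ->).
  apply (set_nf_join _ _ _ (fun g => exists v', V v' /\ lin_subst a (b1 ++ v' :: b2) g) IH
    (rstep_rmeasure _ _ (St_beta _ _)) (rstep_rmeasure _ _ (St_appR _ _ _ HS))); split.
  - intros z (W & HP & HL). destruct (Permutation_elt_inv _ _ _ _ HP) as (c1 & c2 & -> & HP2).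
    destruct ((proj1 LSub_arg_step) _ _ _ _ HL c1 v c2 eq_refl V HV) as (U & HU & F1 & F2).
    exists U. split; auto. intros g Ug. destruct (F1 _ Ug) as (v' & HV' & HL').
    exists v'. split; auto. exists (c1 ++ v' :: c2). split; auto. apply Permutation_elt. auto.
  - intros g (v' & HV' & W' & HP' & HL').
    destruct (Permutation_elt_inv _ _ _ _ HP') as (c1 & c2 & -> & HP2).
    destruct ((proj1 LSub_total) a 0 (c1 ++ v :: c2)) as [z Hz].
    { rewrite <- ((proj1 LSub_length) _ _ _ _ HL'), !length_app. reflexivity. }
    destruct ((proj1 LSub_arg_step) _ _ _ _ Hz c1 v c2 eq_refl V HV) as (U & HU & F1 & F2).
    exists z, U. repeat split; eauto. exists (c1 ++ v :: c2). split; auto. apply Permutation_elt. auto.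
  - intros z (s' & (v' & HV' & ->) & ->).
    exists (lin_subst a (b1 ++ v' :: b2)). split; [apply St_beta|]. eauto.
  - intros g (v' & HV' & Hg).
    exists (RApp (RBag [RLam a]) (RBag (b1 ++ v' :: b2))), (lin_subst a (b1 ++ v' :: b2)).
    repeat split; auto; [|apply St_beta]. eexists. split; [eexists; eauto|reflexivity].
Qed.

Lemma steps_onto_zero b t S : length b <> 1 -> rstep (RBag b) S ->
  steps_onto (image (fun s => RApp s t) S) (fun _ => False).
Proof.
  intros Hb HS. apply rstep_bag_inv in HS as (b1 & v & b2 & V & -> & HV & ->).
  split; [|intros _ []].
  intros z (s & (v' & _ & ->) & ->). exists (fun _ => False). split; auto.
  apply St_zero. rewrite length_app in *. auto.
Qed.

Lemma peak_zero_fun b t S : nf_stable_below (RApp (RBag b) t) -> length b <> 1 -> rstep (RBag b) S ->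
  forall u, set_nf (fun _ => False) u <-> set_nf (image (fun s => RApp s t) S) u.
Proof.
  intros IH Hb HS. apply (set_nf_join _ _ _ (fun _ => False) IH
    (rstep_rmeasure _ _ (St_zero _ t Hb)) (rstep_rmeasure _ _ (St_appL _ _ _ HS)));
    [split; [intros _ []|intros _ []]|apply (steps_onto_zero _ _ _ Hb HS)].
Qed.

Lemma peak_zero_arg b t T : nf_stable_below (RApp (RBag b) t) -> length b <> 1 -> rstep t T ->
  forall u, set_nf (fun _ => False) u <-> set_nf (image (RApp (RBag b)) T) u.
Proof.
  intros IH Hb HT. apply (set_nf_join _ _ _ (fun _ => False) IH
    (rstep_rmeasure _ _ (St_zero _ t Hb)) (rstep_rmeasure _ _ (St_appR _ _ _ HT))).
  - split; [intros _ []|intros _ []].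
  - split; [|intros _ []]. intros z (t' & _ & ->). exists (fun _ => False). split; auto.
    apply St_zero. auto.
Qed.

Lemma peak_app_fun_arg s t S T : nf_stable_below (RApp s t) -> rstep s S -> rstep t T ->
  forall u, set_nf (image (fun s' => RApp s' t) S) u <-> set_nf (image (RApp s) T) u.
Proof.
  intros IH HS HT.
  apply (set_nf_join _ _ _ (fun y => exists s' t', S s' /\ T t' /\ y = RApp s' t') IH
    (rstep_rmeasure _ _ (St_appL _ _ _ HS)) (rstep_rmeasure _ _ (St_appR _ _ _ HT))); split.
  - intros z (s' & Hs & ->). eexists. split; [apply (St_appR _ _ _ HT)|].
    intros g (t' & Ht & ->). eauto.
  - intros g (s' & t' & Hs & Ht & ->). exists (RApp s' t). eexists.
    repeat split; [eexists; eauto|apply (St_appR _ _ _ HT)|eexists; eauto].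
  - intros z (t' & Ht & ->). eexists. split; [apply (St_appL _ _ _ HS)|].
    intros g (s' & Hs & ->). eauto.
  - intros g (s' & t' & Hs & Ht & ->). exists (RApp s t'). eexists.
    repeat split; [eexists; eauto|apply (St_appL _ _ _ HS)|eexists; eauto].
Qed.

Lemma peak_bag_disjoint b1 v m w c2 V W : nf_stable_below (RBag (b1 ++ v :: m ++ w :: c2)) ->
  vstep v V -> vstep w W ->
  forall u, set_nf (image (fun v' => RBag (b1 ++ v' :: m ++ w :: c2)) V) u <->
            set_nf (image (fun w' => RBag ((b1 ++ v :: m) ++ w' :: c2)) W) u.
Proof.
  intros IH HV HW.
  assert (EQ : forall x y, b1 ++ x :: m ++ y :: c2 = (b1 ++ x :: m) ++ y :: c2)
    by (intros; rewrite <- app_assoc; reflexivity).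
  assert (HW' : rstep (RBag (b1 ++ v :: m ++ w :: c2))
                      (image (fun w' => RBag ((b1 ++ v :: m) ++ w' :: c2)) W))
    by (rewrite EQ; apply (St_bag _ _ _ _ HW)).
  apply (set_nf_join _ _ _ (fun y => exists v' w', V v' /\ W w' /\ y = RBag (b1 ++ v' :: m ++ w' :: c2))
    IH (rstep_rmeasure _ _ (St_bag _ _ _ _ HV)) (rstep_rmeasure _ _ HW')); split.
  - intros z (v' & Hv & ->). rewrite EQ. eexists. split; [apply (St_bag _ _ _ _ HW)|].
    intros g (w' & Hw & ->). rewrite <- EQ. eauto.
  - intros g (v' & w' & Hv & Hw & ->). exists (RBag (b1 ++ v' :: m ++ w :: c2)).
    exists (image (fun w'' => RBag ((b1 ++ v' :: m) ++ w'' :: c2)) W).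
    repeat split; [eexists; eauto|rewrite EQ; apply (St_bag _ _ _ _ HW)|exists w'; rewrite EQ; auto].
  - intros z (w' & Hw & ->). rewrite <- EQ. eexists. split; [apply (St_bag _ _ _ _ HV)|].
    intros g (v' & Hv & ->). eauto.
  - intros g (v' & w' & Hv & Hw & ->). exists (RBag ((b1 ++ v :: m) ++ w' :: c2)).
    exists (image (fun v'' => RBag (b1 ++ v'' :: m ++ w' :: c2)) V).
    repeat split; [eexists; eauto|rewrite <- EQ; apply (St_bag _ _ _ _ HV)|eexists; eauto].
Qed.

(* Two steps inside the same subterm [s] of [e]: by stability of [s], the
   normal forms of [s] do not depend on the step, and normalising inside
   the context first is harmless. *)
Lemma peak_same_ctx (C : rterm -> rterm) e s S1 S2 : rctx C ->
  nf_stable_below e -> rmeasure s < rmeasure e -> rstep s S1 -> rstep s S2 ->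
  (forall s', S1 s' -> rmeasure (C s') < rmeasure e) ->
  (forall s', S2 s' -> rmeasure (C s') < rmeasure e) ->
  forall u, set_nf (image C S1) u <-> set_nf (image C S2) u.
Proof.
  intros HC IH Hs H1 H2 L1 L2.
  assert (Hctx : forall S, (forall s', S s' -> rmeasure (C s') < rmeasure e) -> forall u,
            set_nf (image C S) u <-> exists x, set_nf S x /\ red_nf (C x) u).
  { intros S HS u. split.
    - intros (y & (s' & Hs' & ->) & Hn).
      apply (rctx_red_nf_iff C HC) in Hn as (x & H3 & H4); [|].
      + exists x. split; auto. exists s'. auto.
      + intros x' Hr. apply IH. pose proof (reduct_rmeasure _ _ (rctx_reduct C HC _ _ Hr)).
        specialize (HS _ Hs'). lia.
    - intros (x & (s' & Hs' & Hn) & H). exists (C s'). split; [exists s'; auto|].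
      eapply rctx_red_nf; eauto. }
  intro u. rewrite (Hctx S1 L1), (Hctx S2 L2).
  split; intros (x & Hx & Hn); exists x; split; auto;
    rewrite <- nf_stable_step_iff in Hx |- *; eauto.
Qed.

Lemma peak_app_fun s t S1 S2 : nf_stable_below (RApp s t) -> rstep s S1 -> rstep s S2 ->
  forall u, set_nf (image (fun s' => RApp s' t) S1) u <-> set_nf (image (fun s' => RApp s' t) S2) u.
Proof.
  intros IH H1 H2.
  apply (peak_same_ctx (fun x => RApp x t) (RApp s t) s); auto using rctx_app_l, rmeasure_app_l;
    intros s' Hs';
    [apply (rstep_rmeasure _ _ (St_appL _ t _ H1))|apply (rstep_rmeasure _ _ (St_appL _ t _ H2))];
    eexists; eauto.
Qed.

Lemma peak_app_arg s t S1 S2 : nf_stable_below (RApp s t) -> rstep t S1 -> rstep t S2 ->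
  forall u, set_nf (image (RApp s) S1) u <-> set_nf (image (RApp s) S2) u.
Proof.
  intros IH H1 H2. apply (peak_same_ctx (RApp s) (RApp s t) t); auto using rctx_app_r, rmeasure_app_r;
    intros s' Hs';
    [apply (rstep_rmeasure _ _ (St_appR s _ _ H1))|apply (rstep_rmeasure _ _ (St_appR s _ _ H2))];
    eexists; eauto.
Qed.

Lemma peak_bag_same b1 v b2 V1 V2 : nf_stable_below (RBag (b1 ++ v :: b2)) ->
  vstep v V1 -> vstep v V2 ->
  forall u, set_nf (image (fun v' => RBag (b1 ++ v' :: b2)) V1) u <->
            set_nf (image (fun v' => RBag (b1 ++ v' :: b2)) V2) u.
Proof.
  intros IH H1 H2. inversion H1 as [t T1 HT1]; subst.
  destruct (vstep_lam_inv _ _ H2) as (T2 & HT2 & ->).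
  change (fun w => exists t', T1 t' /\ w = RLam t') with (image RLam T1) in *.
  assert (EE : forall T0, seteq (image (fun v' => RBag (b1 ++ v' :: b2)) (image RLam T0))
                                (image (fun x => RBag (b1 ++ RLam x :: b2)) T0)).
  { intros T0 y. split; [intros (? & (t' & Ht & ->) & ->)|intros (t' & Ht & ->)];
      [exists t'|exists (RLam t'); split; [exists t'|]]; auto. }
  intro u. rewrite (set_nf_ext _ _ (EE T1)), (set_nf_ext _ _ (EE T2)).
  apply (peak_same_ctx (fun x => RBag (b1 ++ RLam x :: b2)) (RBag (b1 ++ RLam t :: b2)) t);
    auto using rctx_bag_lam, rmeasure_bag_lam;
    intros s' Hs';
    [apply (rstep_rmeasure _ _ (St_bag b1 _ b2 _ H1))|apply (rstep_rmeasure _ _ (St_bag b1 _ b2 _ H2))];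
    (eexists; split; [eexists; eauto|reflexivity]).
Qed.

Lemma lin_subst_app_lift a s2 ws :
  seteq (lin_subst (RApp a (tlift 0 s2)) ws) (image (fun s => RApp s s2) (lin_subst a ws)).
Proof.
  intro y. split.
  - intros (W & HP & HL). apply LSubT_app_inv in HL as (W1 & W2 & y1 & y2 & -> & -> & H1 & H2).
    apply LSubT_lift_nil_inv in H2 as [-> ->]. rewrite app_nil_r in HP.
    exists y1. split; auto. exists W1. auto.
  - intros (s' & (W & HP & HL) & ->). exists (W ++ []). split; [rewrite app_nil_r; auto|].
    constructor; auto. apply (proj1 LSub_lift_nil).
Qed.

Lemma lin_subst_bag_lift a v ws :
  seteq (lin_subst (RApp (RBag [vlift 0 v]) a) ws) (image (RApp (RBag [v])) (lin_subst a ws)).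
Proof.
  intro y. split.
  - intros (W & HP & HL). apply LSubT_app_inv in HL as (W1 & W2 & y1 & y2 & -> & -> & H1 & H2).
    apply LSubT_single_bag_inv in H1 as (v' & -> & H1).
    apply LSubV_lift_nil_inv in H1 as [-> ->].
    exists y2. split; auto. exists W2. auto.
  - intros (s' & (W & HP & HL) & ->). exists ([] ++ W). split; auto.
    constructor; auto. apply LSubT_single_bag. apply (proj2 LSub_lift_nil).
Qed.

Lemma below_sigma1 a s1 s2 : below (RApp (RApp (RBag [RLam a]) s1) s2)
  (fun y => y = RApp (RBag [RLam (RApp a (tlift 0 s2))]) s1).
Proof. exact (rstep_rmeasure _ _ (St_sigma1 a s1 s2)). Qed.

Lemma peak_sigma1_beta a vs s2 : nf_stable_below (RApp (RApp (RBag [RLam a]) (RBag vs)) s2) ->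
  forall u, red_nf (RApp (RBag [RLam (RApp a (tlift 0 s2))]) (RBag vs)) u <->
            set_nf (image (fun s => RApp s s2) (lin_subst a vs)) u.
Proof.
  intro IH. apply (nf_stable_step_set _ _ _ (IH _ (below_sigma1 _ _ _ _ eq_refl)) (St_beta _ _)).
  apply lin_subst_app_lift.
Qed.

Lemma peak_sigma1_lam a s1 s2 T : nf_stable_below (RApp (RApp (RBag [RLam a]) s1) s2) -> rstep a T ->
  forall u, red_nf (RApp (RBag [RLam (RApp a (tlift 0 s2))]) s1) u <->
            set_nf (image (fun t => RApp (RApp (RBag [RLam t]) s1) s2) T) u.
Proof.
  intros IH HT u. rewrite <- set_nf_single.
  destruct (rctx_comp _ _ (rctx_comp _ _ (rctx_app_l s1) (rctx_bag_lam [] [])) (rctx_app_l (tlift 0 s2))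
              _ _ HT) as (Y & HY & EY).
  destruct (rctx_comp _ _ (rctx_comp _ _ (rctx_app_l s2) (rctx_app_l s1)) (rctx_bag_lam [] [])
              _ _ HT) as (Z & HZ & EZ).
  apply (set_nf_join _ _ _ (image (fun t => RApp (RBag [RLam (RApp t (tlift 0 s2))]) s1) T) IH
    (below_sigma1 _ _ _) (below_seteq _ _ _ HZ EZ)).
  - apply (steps_onto_single _ _ _ HY EY).
  - apply steps_onto_image. intros. apply St_sigma1.
Qed.

Lemma peak_sigma1_arg1 a s1 s2 T : nf_stable_below (RApp (RApp (RBag [RLam a]) s1) s2) -> rstep s1 T ->
  forall u, red_nf (RApp (RBag [RLam (RApp a (tlift 0 s2))]) s1) u <->
            set_nf (image (fun s => RApp (RApp (RBag [RLam a]) s) s2) T) u.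
Proof.
  intros IH HT u. rewrite <- set_nf_single.
  destruct (rctx_comp _ _ (rctx_app_l s2) (rctx_app_r (RBag [RLam a])) _ _ HT) as (Z & HZ & EZ).
  apply (set_nf_join _ _ _ (image (RApp (RBag [RLam (RApp a (tlift 0 s2))])) T) IH
    (below_sigma1 _ _ _) (below_seteq _ _ _ HZ EZ)).
  - apply (steps_onto_single _ _ _ (St_appR _ _ _ HT)). intro; reflexivity.
  - apply steps_onto_image. intros. apply St_sigma1.
Qed.

Lemma peak_sigma1_arg2 a s1 s2 S : nf_stable_below (RApp (RApp (RBag [RLam a]) s1) s2) -> rstep s2 S ->
  forall u, red_nf (RApp (RBag [RLam (RApp a (tlift 0 s2))]) s1) u <->
            set_nf (image (RApp (RApp (RBag [RLam a]) s1)) S) u.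
Proof.
  intros IH HS u. rewrite <- set_nf_single.
  destruct ((proj1 rstep_lift) _ _ HS 0) as (X & HX & EX).
  destruct (rctx_comp _ _ (rctx_comp _ _ (rctx_app_l s1) (rctx_bag_lam [] [])) (rctx_app_r a) _ _ HX)
    as (Y & HY & EY).
  apply (set_nf_join _ _ _ (image (fun s => RApp (RBag [RLam (RApp a (tlift 0 s))]) s1) S) IH
    (below_sigma1 _ _ _) (rstep_rmeasure _ _ (St_appR _ _ _ HS))).
  - apply (steps_onto_single _ _ _ HY).
    exact (seteq_image_comp (fun x => RApp (RBag [RLam (RApp a x)]) s1) (tlift 0) S X Y EX EY).
  - apply steps_onto_image. intros. apply St_sigma1.
Qed.

(* Both sides reach [[\y.[\x.a s2] t] s] (up to lifting): the left one by a
   sigma3-step, the right one by two sigma1-steps. *)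
Lemma peak_sigma1_sigma3 a t s s2 :
  nf_stable_below (RApp (RApp (RBag [RLam a]) (RApp (RBag [RLam t]) s)) s2) ->
  forall u, red_nf (RApp (RBag [RLam (RApp a (tlift 0 s2))]) (RApp (RBag [RLam t]) s)) u <->
            red_nf (RApp (RApp (RBag [RLam (RApp (RBag [vlift 0 (RLam a)]) t)]) s) s2) u.
Proof.
  intros IH u.
  set (y1 := RApp (RBag [RLam (RApp (RBag [vlift 0 (RLam a)]) t)]) s).
  assert (L1 : rmeasure (RApp y1 s2) <
               rmeasure (RApp (RApp (RBag [RLam a]) (RApp (RBag [RLam t]) s)) s2)).
  { apply (rstep_rmeasure _ _ (St_appL _ s2 _ (St_sigma3 _ _ _))). eexists; eauto. }
  rewrite (nf_stable_step1 _ _ _ (IH _ L1) (St_sigma1 _ _ _) (fun _ => iff_refl _)).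
  set (y3 := RApp (RBag [RLam (RApp (RApp (RBag [vlift 0 (RLam a)]) t) (tlift 0 s2))]) s).
  assert (L3 : rmeasure y3 < rmeasure (RApp (RApp (RBag [RLam a]) (RApp (RBag [RLam t]) s)) s2)).
  { apply (Nat.lt_trans _ _ _ (rstep_rmeasure _ _ (St_sigma1 _ _ _) y3 eq_refl) L1). }
  destruct (rctx_comp _ _ (rctx_app_l s) (rctx_bag_lam [] []) _ _
              (St_sigma1 (tlift 1 a) t (tlift 0 s2)))
    as (Y & HY & EY).
  rewrite (nf_stable_step_set _ _ _ (IH _ L3) HY EY).
  rewrite (nf_stable_step1 _ _ _ (IH _ (below_sigma1 _ _ _ _ eq_refl)) (St_sigma3 _ _ _)
             (fun _ => iff_refl _)).
  simpl. rewrite (proj1 lift_comm) by lia. split.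
  - intro H. eexists. split; [|exact H]. eexists. split; reflexivity.
  - intros (x & (x' & -> & ->) & H). auto.
Qed.

Lemma peak_sigma1_fun a s1 s2 S : nf_stable_below (RApp (RApp (RBag [RLam a]) s1) s2) ->
  rstep (RApp (RBag [RLam a]) s1) S ->
  forall u, red_nf (RApp (RBag [RLam (RApp a (tlift 0 s2))]) s1) u <->
            set_nf (image (fun s => RApp s s2) S) u.
Proof.
  intros IH HS u. inversion HS as [a' vs | b t Hb | | v t s | s' t' S0 HS0 | s' t' S0 HS0 | ]; subst.
  - apply (peak_sigma1_beta _ _ _ IH).
  - simpl in Hb. lia.
  - rewrite (peak_sigma1_sigma3 _ _ _ _ IH), <- set_nf_single.
    apply set_nf_ext. intro y. split; [intros ->; eexists; eauto|intros (? & -> & ->); auto].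
  - destruct (rstep_lam_bag_inv _ _ HS0) as (T & HT & ES).
    rewrite (peak_sigma1_lam _ _ _ T IH HT). apply set_nf_ext. intro y. split.
    + intros (t & Ht & ->). exists (RApp (RBag [RLam t]) s1). split; auto.
      exists (RBag [RLam t]). split; auto. apply ES. exists t. auto.
    + intros (? & (x & Hx & ->) & ->). apply ES in Hx as (t & Ht & ->). exists t. auto.
  - rewrite (peak_sigma1_arg1 _ _ _ S0 IH HS0). apply set_nf_ext. intro y. split.
    + intros (s & Hs & ->). exists (RApp (RBag [RLam a]) s). split; auto. exists s. auto.
    + intros (? & (s & Hs & ->) & ->). exists s. auto.
Qed.

Lemma image_comp {A B C} (f : B -> C) (g : A -> B) X :
  seteq (image f (image g X)) (image (fun x => f (g x)) X).
Proof. apply (seteq_image_comp f g X (image g X)); intro; reflexivity. Qed.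

Lemma below_sigma3 v a s : below (RApp (RBag [v]) (RApp (RBag [RLam a]) s))
  (fun y => y = RApp (RBag [RLam (RApp (RBag [vlift 0 v]) a)]) s).
Proof. exact (rstep_rmeasure _ _ (St_sigma3 v a s)). Qed.

Lemma peak_sigma3_val v a s S : nf_stable_below (RApp (RBag [v]) (RApp (RBag [RLam a]) s)) ->
  rstep (RBag [v]) S ->
  forall u, red_nf (RApp (RBag [RLam (RApp (RBag [vlift 0 v]) a)]) s) u <->
            set_nf (image (fun s' => RApp s' (RApp (RBag [RLam a]) s)) S) u.
Proof.
  intros IH HS u. rewrite <- set_nf_single.
  pose proof HS as HS'. apply rstep_single_bag_inv in HS' as (V & HV & ->).
  rewrite (set_nf_ext _ _ (image_comp _ _ _)).
  destruct ((proj2 rstep_lift) _ _ HV 0) as (X & HX & EX).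
  destruct (rctx_comp _ _ (rctx_comp _ _ (rctx_app_l s) (rctx_bag_lam [] [])) (rctx_app_l a)
              _ _ (St_bag [] _ [] _ HX)) as (Y & HY & EY).
  apply (set_nf_join _ _ _ (image (fun v' => RApp (RBag [RLam (RApp (RBag [vlift 0 v']) a)]) s) V) IH
    (below_sigma3 _ _ _)).
  - intros z (v' & Hv & ->). apply (rstep_rmeasure _ _ (St_appL _ _ _ HS)).
    eexists. split; [eexists; eauto|reflexivity].
  - apply (steps_onto_single _ _ _ HY). intro y. rewrite (EY y). split.
    + intros (? & (w & Hw & ->) & ->). apply EX in Hw as (v' & Hv & ->). exists v'. auto.
    + intros (v' & Hv & ->). exists (RBag [vlift 0 v']). split; auto.
      exists (vlift 0 v'). split; auto. apply EX. exists v'. auto.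
  - apply steps_onto_image. intros. apply St_sigma3.
Qed.

Lemma peak_sigma3_beta v a vs : nf_stable_below (RApp (RBag [v]) (RApp (RBag [RLam a]) (RBag vs))) ->
  forall u, red_nf (RApp (RBag [RLam (RApp (RBag [vlift 0 v]) a)]) (RBag vs)) u <->
            set_nf (image (RApp (RBag [v])) (lin_subst a vs)) u.
Proof.
  intro IH. apply (nf_stable_step_set _ _ _ (IH _ (below_sigma3 _ _ _ _ eq_refl)) (St_beta _ _)).
  apply lin_subst_bag_lift.
Qed.

Lemma peak_sigma3_lam v a s T : nf_stable_below (RApp (RBag [v]) (RApp (RBag [RLam a]) s)) ->
  rstep a T ->
  forall u, red_nf (RApp (RBag [RLam (RApp (RBag [vlift 0 v]) a)]) s) u <->
            set_nf (image (fun t => RApp (RBag [v]) (RApp (RBag [RLam t]) s)) T) u.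
Proof.
  intros IH HT u. rewrite <- set_nf_single.
  destruct (rctx_comp _ _ (rctx_comp _ _ (rctx_app_l s) (rctx_bag_lam [] []))
              (rctx_app_r (RBag [vlift 0 v])) _ _ HT) as (Y & HY & EY).
  destruct (rctx_comp _ _ (rctx_comp _ _ (rctx_app_r (RBag [v])) (rctx_app_l s)) (rctx_bag_lam [] [])
              _ _ HT) as (Z & HZ & EZ).
  apply (set_nf_join _ _ _ (image (fun t => RApp (RBag [RLam (RApp (RBag [vlift 0 v]) t)]) s) T) IH
    (below_sigma3 _ _ _) (below_seteq _ _ _ HZ EZ)).
  - apply (steps_onto_single _ _ _ HY EY).
  - apply steps_onto_image. intros. apply St_sigma3.
Qed.

Lemma peak_sigma3_arg v a s T : nf_stable_below (RApp (RBag [v]) (RApp (RBag [RLam a]) s)) ->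
  rstep s T ->
  forall u, red_nf (RApp (RBag [RLam (RApp (RBag [vlift 0 v]) a)]) s) u <->
            set_nf (image (fun s' => RApp (RBag [v]) (RApp (RBag [RLam a]) s')) T) u.
Proof.
  intros IH HT u. rewrite <- set_nf_single.
  destruct (rctx_comp _ _ (rctx_app_r (RBag [v])) (rctx_app_r (RBag [RLam a])) _ _ HT) as (Z & HZ & EZ).
  apply (set_nf_join _ _ _ (image (RApp (RBag [RLam (RApp (RBag [vlift 0 v]) a)])) T) IH
    (below_sigma3 _ _ _) (below_seteq _ _ _ HZ EZ)).
  - apply (steps_onto_single _ _ _ (St_appR _ _ _ HT)). intro; reflexivity.
  - apply steps_onto_image. intros. apply St_sigma3.
Qed.

Lemma peak_sigma3_sigma3 v a t s0 :
  nf_stable_below (RApp (RBag [v]) (RApp (RBag [RLam a]) (RApp (RBag [RLam t]) s0))) ->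
  forall u, red_nf (RApp (RBag [RLam (RApp (RBag [vlift 0 v]) a)]) (RApp (RBag [RLam t]) s0)) u <->
            red_nf (RApp (RBag [v]) (RApp (RBag [RLam (RApp (RBag [vlift 0 (RLam a)]) t)]) s0)) u.
Proof.
  intros IH u.
  set (y1 := RApp (RBag [RLam (RApp (RBag [vlift 0 (RLam a)]) t)]) s0).
  assert (L2 : rmeasure (RApp (RBag [v]) y1) <
               rmeasure (RApp (RBag [v]) (RApp (RBag [RLam a]) (RApp (RBag [RLam t]) s0)))).
  { apply (rstep_rmeasure _ _ (St_appR (RBag [v]) _ _ (St_sigma3 _ _ _))). eexists; eauto. }
  rewrite (nf_stable_step1 _ _ _ (IH _ L2) (St_sigma3 _ _ _) (fun _ => iff_refl _)).
  set (y3 := RApp (RBag [RLam (RApp (RBag [vlift 0 v]) (RApp (RBag [vlift 0 (RLam a)]) t))]) s0).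
  assert (L3 : rmeasure y3 <
               rmeasure (RApp (RBag [v]) (RApp (RBag [RLam a]) (RApp (RBag [RLam t]) s0)))).
  { apply (Nat.lt_trans _ _ _ (rstep_rmeasure _ _ (St_sigma3 _ _ _) y3 eq_refl) L2). }
  destruct (rctx_comp _ _ (rctx_app_l s0) (rctx_bag_lam [] []) _ _
              (St_sigma3 (vlift 0 v) (tlift 1 a) t))
    as (Y & HY & EY).
  rewrite (nf_stable_step_set _ _ _ (IH _ L3) HY EY).
  rewrite (nf_stable_step1 _ _ _ (IH _ (below_sigma3 _ _ _ _ eq_refl)) (St_sigma3 _ _ _)
             (fun _ => iff_refl _)).
  simpl. rewrite (proj2 lift_comm v 0 0) by lia. split.
  - intro H. eexists. split; [|exact H]. eexists. split; reflexivity.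
  - intros (x & (x' & -> & ->) & H). auto.
Qed.

Lemma peak_sigma3_redex v a s S : nf_stable_below (RApp (RBag [v]) (RApp (RBag [RLam a]) s)) ->
  rstep (RApp (RBag [RLam a]) s) S ->
  forall u, red_nf (RApp (RBag [RLam (RApp (RBag [vlift 0 v]) a)]) s) u <->
            set_nf (image (RApp (RBag [v])) S) u.
Proof.
  intros IH HS u. inversion HS as [a' vs | b t Hb | | w t s0 | s' t' S0 HS0 | s' t' S0 HS0 | ]; subst.
  - apply (peak_sigma3_beta _ _ _ IH).
  - simpl in Hb. lia.
  - rewrite (peak_sigma3_sigma3 _ _ _ _ IH), <- set_nf_single.
    apply set_nf_ext. intro y. split; [intros ->; eexists; eauto|intros (? & -> & ->); auto].
  - destruct (rstep_lam_bag_inv _ _ HS0) as (T & HT & ES).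
    rewrite (peak_sigma3_lam _ _ _ T IH HT). apply set_nf_ext. intro y. split.
    + intros (t & Ht & ->). exists (RApp (RBag [RLam t]) s). split; auto.
      exists (RBag [RLam t]). split; auto. apply ES. exists t. auto.
    + intros (? & (x & Hx & ->) & ->). apply ES in Hx as (t & Ht & ->). exists t. auto.
  - rewrite (peak_sigma3_arg _ _ _ S0 IH HS0). apply set_nf_ext. intro y. split.
    + intros (s' & Hs & ->). exists (RApp (RBag [RLam a]) s'). split; auto. exists s'. auto.
    + intros (? & (s' & Hs & ->) & ->). exists s'. auto.
Qed.

Lemma app_cons_eq_app_cons (b1 b2 c1 c2 : list rval) v w : b1 ++ v :: b2 = c1 ++ w :: c2 ->
  (b1 = c1 /\ v = w /\ b2 = c2) \/ (exists m, c1 = b1 ++ v :: m /\ b2 = m ++ w :: c2) \/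
  (exists m, b1 = c1 ++ w :: m /\ c2 = m ++ v :: b2).
Proof.
  intro H. destruct (app_eq_app_cons _ _ _ _ _ H) as [(m & -> & ->)|(n & E & ->)]; [eauto|].
  destruct n as [|x n]; simpl in E; injection E as -> ->.
  - left. rewrite app_nil_r. auto.
  - right. left. eauto.
Qed.

Ltac peak :=
  first [ reflexivity
        | eapply peak_beta_fun; eassumption | symmetry; eapply peak_beta_fun; eassumption
        | eapply peak_beta_arg; eassumption | symmetry; eapply peak_beta_arg; eassumption
        | eapply peak_zero_fun; eassumption | symmetry; eapply peak_zero_fun; eassumption
        | eapply peak_zero_arg; eassumption | symmetry; eapply peak_zero_arg; eassumption
        | eapply peak_app_fun; eassumption | eapply peak_app_arg; eassumption
        | eapply peak_app_fun_arg; eassumption | symmetry; eapply peak_app_fun_arg; eassumption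
        | rewrite set_nf_single; first
            [ eapply peak_sigma1_fun | eapply peak_sigma1_arg2
            | eapply peak_sigma3_val | eapply peak_sigma3_redex ]; eassumption
        | symmetry; rewrite set_nf_single; first
            [ eapply peak_sigma1_fun | eapply peak_sigma1_arg2
            | eapply peak_sigma3_val | eapply peak_sigma3_redex ]; eassumption ].

Lemma local_confluence e : nf_stable_below e ->
  forall E1 E2, rstep e E1 -> rstep e E2 -> forall u, set_nf E1 u <-> set_nf E2 u.
Proof.
  intros IH E1 E2 H1 H2 u.
  inversion H1; subst; inversion H2; subst; try discriminate; try (simpl in *; lia); try peak.
  match goal with E : _ ++ _ :: _ = _ ++ _ :: _ |- _ =>
    symmetry in E;
    apply app_cons_eq_app_cons in E as [(-> & -> & ->)|[(m & -> & ->)|(m & -> & ->)]] end.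
  - eapply peak_bag_same; eauto.
  - eapply peak_bag_disjoint; eauto.
  - symmetry. rewrite <- app_assoc in IH. eapply peak_bag_disjoint; eauto.
Qed.

Theorem nf_stable_all e : nf_stable e.
Proof.
  induction e as [e IH] using (well_founded_induction (well_founded_ltof _ rmeasure)).
  intros E HE u Hu. destruct Hu as [e Hn|e E2 y u HE2 Hy Hyu].
  - exfalso. apply Hn. eauto.
  - apply (local_confluence e IH E E2 HE HE2 u). exists y. auto.
Qed.

(** * Normal forms of sets *)

Lemma sstep_set_nf E E' : sstep E E' -> forall u, set_nf E u <-> set_nf E' u.
Proof.
  intros (e & E1 & He & HS & HE') u. split.
  - intros (x & Hx & Hn). destruct (classic (x = e)) as [->|Hne].
    + destruct (nf_stable_all e E1 HS u Hn) as (y & Hy & Hyn). exists y. split; auto. apply HE'. auto.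
    + exists x. split; auto. apply HE'. auto.
  - intros (x & Hx & Hn). apply HE' in Hx as [[Hx _]|Hx].
    + exists x. auto.
    + exists e. split; auto. eapply red_nf_step; eauto.
Qed.

Lemma sred_set_nf E F : sred E F -> forall u, set_nf E u <-> set_nf F u.
Proof. induction 1; intro u; [reflexivity|]. rewrite (sstep_set_nf _ _ H u). auto. Qed.

Lemma is_nf_red_nf e F : is_nf e F -> forall u, F u <-> red_nf e u.
Proof.
  intros [HR HN] u. rewrite <- set_nf_single, (sred_set_nf _ _ HR u). split.
  - intro H. exists u. split; auto. constructor. auto.
  - intros (x & Hx & Hn). apply red_nf_of_normal in Hn; subst; auto.
Qed.

Definition finite (X : rterm -> Prop) : Prop := exists l, forall u, X u <-> In u l.

Fixpoint insert_all {A} (x : A) (l : list A) : list (list A) :=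
  match l with
  | [] => [[x]]
  | y :: l' => (x :: y :: l') :: map (cons y) (insert_all x l')
  end.

Fixpoint permutations {A} (l : list A) : list (list A) :=
  match l with
  | [] => [[]]
  | x :: l' => flat_map (insert_all x) (permutations l')
  end.

Lemma in_insert_all {A} (x : A) c1 c2 : In (c1 ++ x :: c2) (insert_all x (c1 ++ c2)).
Proof.
  induction c1; simpl.
  - destruct c2; simpl; auto.
  - right. apply in_map. auto.
Qed.

Lemma in_permutations {A} (l l' : list A) : Permutation l l' -> In l' (permutations l).
Proof.
  revert l'. induction l as [|a l IH]; intros l' H.
  - apply Permutation_nil in H as ->. simpl. auto.
  - destruct (Permutation_vs_cons_inv (Permutation_sym H)) as (c1 & c2 & ->).
    apply Permutation_cons_app_inv in H. simpl. apply in_flat_map.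
    exists (c1 ++ c2). split; auto. apply in_insert_all.
Qed.

Lemma finite_functional_image {A} (P : A -> rterm -> Prop) (l : list A) :
  (forall a u1 u2, P a u1 -> P a u2 -> u1 = u2) -> finite (fun u => exists a, In a l /\ P a u).
Proof.
  intro Hf. induction l as [|a l [lu Hlu]].
  - exists []. intro u. simpl. split; [intros (? & [] & _)|intros []].
  - destruct (classic (exists u, P a u)) as [[u Hu]|Hn].
    + exists (u :: lu). intro y. simpl. rewrite <- Hlu. split.
      * intros (a' & [<-|Ha'] & Hp); [left; eapply Hf; eauto|right; eauto].
      * intros [<-|(a' & Ha' & Hp)]; eauto.
    + exists lu. intro y. rewrite <- Hlu. split.
      * intros (a' & [<-|Ha'] & Hp); [exfalso; eauto|eauto].
      * intros (a' & Ha' & Hp). exists a'. simpl. auto.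
Qed.

Lemma finite_image {A} (f : A -> rterm) (X : A -> Prop) :
  (exists l, forall x, X x <-> In x l) -> finite (image f X).
Proof.
  intros (l & Hl). exists (map f l). intro y. rewrite in_map_iff. split.
  - intros (x & Hx & ->). exists x. split; auto. apply Hl; auto.
  - intros (x & <- & Hx). exists x. split; auto. apply Hl; auto.
Qed.

Lemma rstep_finite : (forall e E, rstep e E -> finite E) /\
  (forall v V, vstep v V -> exists l, forall w, V w <-> In w l).
Proof.
  apply step_mutind; intros.
  - destruct (finite_functional_image (fun W u => Permutation vs W /\ LSubT 0 W t u) (permutations vs))
      as (lu & Hlu).
    { intros a u1 u2 [_ H1] [_ H2]. eapply (proj1 LSub_functional); eauto. }
    exists lu. intro u. rewrite <- Hlu. split.
    + intros (W & HP & HL). exists W. split; auto. apply in_permutations; auto.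
    + intros (W & _ & HP & HL). exists W. auto.
  - exists []. intro; simpl; tauto.
  - exists [RApp (RBag [RLam (RApp t (tlift 0 s2))]) s1]. intro; simpl; intuition.
  - exists [RApp (RBag [RLam (RApp (RBag [vlift 0 v]) t)]) s]. intro; simpl; intuition.
  - apply (finite_image (fun x => RApp x t) S). auto.
  - apply (finite_image (fun x => RApp s x) T). auto.
  - apply (finite_image (fun w => RBag (b1 ++ w :: b2)) V). auto.
  - destruct H0 as (l & Hl). exists (map RLam l). intro y. rewrite in_map_iff. split.
    + intros (w & Hw & ->). exists w. split; auto. apply Hl; auto.
    + intros (w & <- & Hw). exists w. split; auto. apply Hl; auto.
Qed.

Definition normalizable (E : rterm -> Prop) : Prop :=
  exists F, sred E F /\ forall u, F u -> rnormal u.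

(* One level of the multiset induction: the reducible elements of measure
   [n] are reduced one by one (those still to be examined are listed in
   [H], those already examined, or of smaller measure, in [R]). *)
Lemma normalizable_level n :
  (forall E l, (forall u, E u -> In u l) -> (forall x, E x -> ~ rnormal x -> rmeasure x < n) ->
     normalizable E) ->
  forall H R E, (forall u, E u -> In u H \/ In u R) ->
  (forall x, E x -> In x R -> ~ rnormal x -> rmeasure x < n) ->
  (forall x, E x -> ~ rnormal x -> rmeasure x <= n) -> normalizable E.
Proof.
  intros IHn H. induction H as [|x H IHH]; intros R E0 H1 H2 H3.
  - apply (IHn E0 R).
    + intros u Hu. destruct (H1 _ Hu) as [[]|]; auto.
    + intros x Hx Hn. apply H2; auto. destruct (H1 _ Hx) as [[]|]; auto.
  - destruct (classic (E0 x /\ ~ rnormal x /\ rmeasure x = n)) as [(Ex & Nx & Mx)|Hno].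
    + apply NNPP in Nx as (X & HX). destruct ((proj1 rstep_finite) _ _ HX) as (lX & HlX).
      assert (Hlt : forall y, X y -> rmeasure y < n)
        by (intros y Hy; rewrite <- Mx; eapply rstep_rmeasure; eauto).
      destruct (IHH (R ++ lX) (fun u => (E0 u /\ u <> x) \/ X u)) as (F & HF1 & HF2).
      * intros u [[Hu Hne]|Hu].
        -- destruct (H1 _ Hu) as [[->|]|]; auto; [contradiction|]. right. apply in_or_app. auto.
        -- right. apply in_or_app. right. apply HlX. auto.
      * intros y [[Hy Hne]|Hy] Hin Hn; [|apply Hlt; auto].
        apply in_app_or in Hin as [|]; [apply H2; auto|apply Hlt, HlX; auto].
      * intros y [[Hy _]|Hy] Hn; auto. specialize (Hlt _ Hy). lia.
      * exists F. split; auto. eapply sred_step; eauto. exists x, X. repeat split; auto.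
    + apply (IHH (x :: R) E0).
      * intros u Hu. destruct (H1 _ Hu) as [[->|]|]; simpl; auto.
      * intros y Hy [->|Hin] Hn; auto.
        specialize (H3 _ Hy Hn). assert (rmeasure y <> n) by (intro; apply Hno; auto). lia.
      * auto.
Qed.

Lemma normalizable_finite n E l : (forall u, E u -> In u l) ->
  (forall x, E x -> ~ rnormal x -> rmeasure x < n) -> normalizable E.
Proof.
  revert E l. induction n; intros E l Hl Hb.
  - exists E. split; [constructor|]. intros u Hu. apply NNPP. intro Hn. specialize (Hb _ Hu Hn). lia.
  - apply (normalizable_level n IHn l [] E); auto.
    + intros x Hx [].
    + intros x Hx Hn. specialize (Hb _ Hx Hn). lia.
Qed.

Lemma is_nf_exists e : exists F, is_nf e F.
Proof.
  destruct (normalizable_finite (S (rmeasure e)) (fun u => u = e) [e]) as (F & HF1 & HF2).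
  - intros u ->. simpl; auto.
  - intros x -> _. lia.
  - exists F. split; auto.
Qed.

Lemma NF_red_nf E t : NF E t <-> exists e, E e /\ red_nf e t.
Proof.
  split.
  - intros (e & F & He & HF & Ft). exists e. split; auto. apply (is_nf_red_nf e F HF). auto.
  - intros (e & He & Hn). destruct (is_nf_exists e) as [F HF]. exists e, F.
    split; [auto|split; [exact HF|]]. apply (is_nf_red_nf e F HF). auto.
Qed.

(** * Multiset equality is a bisimulation *)

Lemma bpw_Forall2 b c : bpw b c <-> Forall2 vreq b c.
Proof. split; induction 1; constructor; auto. Qed.

Lemma req_bag_inv b x : req (RBag b) x ->
  exists b1 c, x = RBag c /\ Permutation b b1 /\ Forall2 vreq b1 c.
Proof.
  intro H. inversion H as [|? b1 c HP HB]; subst. apply bpw_Forall2 in HB. eauto.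
Qed.

Lemma req_bag' b b1 c : Permutation b b1 -> Forall2 vreq b1 c -> req (RBag b) (RBag c).
Proof. intros HP HF. apply req_bag with b1; auto. apply bpw_Forall2. auto. Qed.

Lemma req_app_inv s t x : req (RApp s t) x -> exists s' t', x = RApp s' t' /\ req s s' /\ req t t'.
Proof. intro H. inversion H; subst. eauto. Qed.

Lemma vreq_var_inv j x : vreq (RVar j) x -> x = RVar j.
Proof. intro H. inversion H; subst. auto. Qed.

Lemma vreq_lam_inv t x : vreq (RLam t) x -> exists t', x = RLam t' /\ req t t'.
Proof. intro H. inversion H; subst. eauto. Qed.

Lemma Forall2_perm_r {A B} (R : A -> B -> Prop) l1 l2 l2' : Forall2 R l1 l2 -> Permutation l2 l2' ->
  exists l1', Permutation l1 l1' /\ Forall2 R l1' l2'.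
Proof.
  intros HF HP. apply Forall2_flip in HF.
  destruct (Permutation_Forall2 HP HF) as (l1' & P & HF'). exists l1'. split; auto.
  apply Forall2_flip. auto.
Qed.

Lemma req_refl : (forall t, req t t) /\ (forall v, vreq v v).
Proof.
  apply rterm_rval_ind; intros; try constructor; auto.
  apply (req_bag' b b); auto. induction H; constructor; auto.
Qed.

Lemma req_sym : (forall t t', req t t' -> req t' t) /\ (forall v v', vreq v v' -> vreq v' v).
Proof.
  apply rterm_rval_ind.
  - intros s t IHs IHt x H. apply req_app_inv in H as (s' & t' & -> & H1 & H2). constructor; auto.
  - intros b Hb x H. apply req_bag_inv in H as (b1 & b2 & -> & HP & HB).
    apply (Permutation_Forall HP) in Hb.
    assert (HB' : Forall2 vreq b2 b1)
      by (clear HP; induction HB; inversion Hb; subst; constructor; auto).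
    destruct (Forall2_perm_r _ _ _ _ HB' (Permutation_sym HP)) as (b2' & P2 & H2).
    apply (req_bag' _ _ _ P2 H2).
  - intros j x H. apply vreq_var_inv in H as ->. constructor.
  - intros t IH x H. apply vreq_lam_inv in H as (t' & -> & H). constructor. auto.
Qed.

Lemma req_trans : (forall a b c, req a b -> req b c -> req a c) /\
  (forall a b c, vreq a b -> vreq b c -> vreq a c).
Proof.
  apply rterm_rval_ind.
  - intros s t IHs IHt b c H1 H2. apply req_app_inv in H1 as (s' & t' & -> & H1 & H1').
    apply req_app_inv in H2 as (s'' & t'' & -> & H2 & H2'). constructor; eauto.
  - intros x Hx b c H1 H2. apply req_bag_inv in H1 as (x1 & y & -> & P1 & B1).
    apply req_bag_inv in H2 as (y1 & z & -> & P2 & B2).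
    destruct (Forall2_perm_r _ _ _ _ B1 P2) as (x2 & P3 & B3).
    apply (Permutation_Forall P1), (Permutation_Forall P3) in Hx.
    apply (req_bag' _ x2); [eauto using Permutation_trans|].
    clear -Hx B3 B2. revert z B2. induction B3; intros z B2; inversion B2; subst; constructor;
      inversion Hx; subst; eauto.
  - intros j b c H1 H2. apply vreq_var_inv in H1 as ->. auto.
  - intros t IH b c H1 H2. apply vreq_lam_inv in H1 as (t' & -> & H1).
    apply vreq_lam_inv in H2 as (t'' & -> & H2). constructor. eauto.
Qed.

Lemma req_lift : (forall t t', req t t' -> forall c, req (tlift c t) (tlift c t')) /\
  (forall v v', vreq v v' -> forall c, vreq (vlift c v) (vlift c v')).
Proof.
  apply rterm_rval_ind.
  - intros s t IHs IHt x H c. apply req_app_inv in H as (s' & t' & -> & H1 & H2). simpl.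
    constructor; auto.
  - intros b Hb x H c. apply req_bag_inv in H as (b1 & b2 & -> & HP & HB).
    apply (Permutation_Forall HP) in Hb. simpl.
    apply (req_bag' _ (map (vlift c) b1)); [apply Permutation_map; auto|].
    clear HP. induction HB; simpl; constructor; inversion Hb; subst; auto.
  - intros j x H c. apply vreq_var_inv in H as ->. constructor.
  - intros t IH x H c. apply vreq_lam_inv in H as (t' & -> & H). simpl. constructor. auto.
Qed.

Lemma vreq_shift n v v' : vreq v v' -> vreq (shift n v) (shift n v').
Proof. induction n; simpl; auto. intro. apply (proj2 req_lift). auto. Qed.

Lemma req_LSub :
  (forall t t' k L y L', req t t' -> LSubT k L t y -> Forall2 vreq L L' ->
     exists L'' y', Permutation L' L'' /\ LSubT k L'' t' y' /\ req y y') /\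
  (forall v v' k L y L', vreq v v' -> LSubV k L v y -> Forall2 vreq L L' ->
     exists L'' y', Permutation L' L'' /\ LSubV k L'' v' y' /\ vreq y y').
Proof.
  apply rterm_rval_ind.
  - intros s t IHs IHt x k L y L' H HL HB.
    apply req_app_inv in H as (s' & t' & -> & H1 & H2).
    apply LSubT_app_inv in HL as (L1 & L2 & y1 & y2 & -> & -> & HL1 & HL2).
    apply Forall2_app_inv_l in HB as (L1' & L2' & HB1 & HB2 & ->).
    destruct (IHs _ _ _ _ _ H1 HL1 HB1) as (M1 & z1 & P1 & Z1 & R1).
    destruct (IHt _ _ _ _ _ H2 HL2 HB2) as (M2 & z2 & P2 & Z2 & R2).
    exists (M1 ++ M2), (RApp z1 z2). repeat split; [apply Permutation_app; auto|constructor; auto|].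
    constructor; auto.
  - intros b Hb x k L y L' H HL HB.
    apply req_bag_inv in H as (b1 & b2 & -> & HP & HBW).
    apply LSubT_bag_inv in HL as (c & -> & HL).
    destruct (LSubB_perm_l _ _ _ _ _ HL HP) as (L1 & c1 & PL & Pc & HL1).
    destruct (Permutation_Forall2 PL HB) as (L1' & PL' & HB1).
    apply (Permutation_Forall HP) in Hb.
    assert (exists L2 c2, Permutation L1' L2 /\ LSubB k L2 b2 c2 /\ Forall2 vreq c1 c2)
      as (L2 & c2 & P2 & HL2 & HC).
    { clear -Hb HBW HL1 HB1. revert L1 c1 L1' HL1 HB1.
      induction HBW as [|v v' b b' Hv HBW IH]; intros L1 c1 L1' HL1 HB1.
      - apply LSubB_nil_inv in HL1 as [-> ->]. inversion HB1. exists [], []. repeat constructor.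
      - inversion Hb as [|? ? Hv' Hb']; subst.
        apply LSubB_cons_inv in HL1 as (La & Lb & w & c' & -> & -> & Hw & Hc).
        apply Forall2_app_inv_l in HB1 as (La' & Lb' & Ba & Bb & ->).
        destruct (Hv' _ _ _ _ _ Hv Hw Ba) as (Ma & w' & Pa & Wa & Ra).
        destruct (IH Hb' _ _ _ Hc Bb) as (Mb & c2 & Pb & Wb & Rb).
        exists (Ma ++ Mb), (w' :: c2). repeat split; [apply Permutation_app; auto|constructor; auto|].
        constructor; auto. }
    exists L2, (RBag c2). repeat split; [eauto using Permutation_trans|constructor; auto|].
    apply (req_bag' _ c1); auto.
  - intros j x k L y L' H HL HB. apply vreq_var_inv in H as ->.
    apply LSubV_var_inv in HL as [(H1 & -> & ->)|[(H1 & -> & ->)|(-> & w & -> & ->)]].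
    + inversion HB. exists [], (RVar j). repeat constructor; auto.
    + inversion HB. exists [], (RVar (pred j)).
      repeat split; [constructor|apply LS_gt; auto|constructor].
    + inversion HB as [|? w' ? ? Hw Hnil]; inversion Hnil; subst.
      exists [w'], (shift k w'). repeat split; [reflexivity|apply LS_hit|apply vreq_shift; auto].
  - intros t IH x k L y L' H HL HB. apply vreq_lam_inv in H as (t' & -> & H).
    apply LSubV_lam_inv in HL as (z & -> & HL).
    destruct (IH _ _ _ _ _ H HL HB) as (M & z' & P & Z & R).
    exists M, (RLam z'). repeat split; auto; constructor; auto.
Qed.

Lemma req_single_bag_inv v x : req (RBag [v]) x -> exists v', x = RBag [v'] /\ vreq v v'.
Proof.
  intro H. apply req_bag_inv in H as (b1 & b2 & -> & HP & HB).
  apply Permutation_length_1_inv in HP as ->. inversion HB as [|? v' ? ? Hv Hnil].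
  inversion Hnil. eauto.
Qed.

Lemma req_single_bag v v' : vreq v v' -> req (RBag [v]) (RBag [v']).
Proof. intro. apply (req_bag' _ [v]); auto. Qed.

Definition req_step_sim (e : rterm) (E : rterm -> Prop) : Prop :=
  forall e', req e e' -> exists E', rstep e' E' /\ forall y, E y -> exists y', E' y' /\ req y y'.

Lemma req_step_sim_beta a ws : req_step_sim (RApp (RBag [RLam a]) (RBag ws)) (lin_subst a ws).
Proof.
  intros x H. apply req_app_inv in H as (x1 & x2 & -> & H1 & H2).
  apply req_single_bag_inv in H1 as (v' & -> & Hv). apply vreq_lam_inv in Hv as (a2 & -> & Ha).
  apply req_bag_inv in H2 as (ws1 & ws2 & -> & HP & HB).
  eexists. split; [apply St_beta|]. intros y (W & HW & HL).
  destruct (Permutation_Forall2 (Permutation_trans (Permutation_sym HP) HW) HB) as (W2 & P2 & B2).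
  destruct ((proj1 req_LSub) _ _ _ _ _ _ Ha HL B2) as (L'' & y' & P3 & HL' & R).
  exists y'. split; auto. exists L''. eauto using Permutation_trans.
Qed.

Lemma req_step_sim_sigma1 a s1 s2 : req_step_sim (RApp (RApp (RBag [RLam a]) s1) s2)
  (fun u => u = RApp (RBag [RLam (RApp a (tlift 0 s2))]) s1).
Proof.
  intros x H. apply req_app_inv in H as (x1 & s2' & -> & H1 & H2).
  apply req_app_inv in H1 as (x0 & s1' & -> & H1 & H3).
  apply req_single_bag_inv in H1 as (v' & -> & Hv). apply vreq_lam_inv in Hv as (a2 & -> & Ha).
  eexists. split; [apply St_sigma1|]. intros y ->. eexists. split; [reflexivity|].
  constructor; auto. apply req_single_bag. constructor. constructor; auto.
  apply (proj1 req_lift). auto.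
Qed.

Lemma req_step_sim_sigma3 v a s : req_step_sim (RApp (RBag [v]) (RApp (RBag [RLam a]) s))
  (fun u => u = RApp (RBag [RLam (RApp (RBag [vlift 0 v]) a)]) s).
Proof.
  intros x H. apply req_app_inv in H as (x1 & x2 & -> & H1 & H2).
  apply req_single_bag_inv in H1 as (v' & -> & Hv).
  apply req_app_inv in H2 as (x0 & s' & -> & H2 & H3).
  apply req_single_bag_inv in H2 as (w' & -> & Hw). apply vreq_lam_inv in Hw as (a2 & -> & Ha).
  eexists. split; [apply St_sigma3|]. intros y ->. eexists. split; [reflexivity|].
  constructor; auto. apply req_single_bag. constructor. constructor; auto.
  apply req_single_bag. apply (proj2 req_lift). auto.
Qed.

Lemma req_sim : (forall e E, rstep e E -> req_step_sim e E) /\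
  (forall v V, vstep v V -> forall v', vreq v v' ->
     exists V', vstep v' V' /\ forall w, V w -> exists w', V' w' /\ vreq w w').
Proof.
  apply step_mutind.
  - apply req_step_sim_beta.
  - intros b t Hb x H. apply req_app_inv in H as (x1 & x2 & -> & H1 & H2).
    apply req_bag_inv in H1 as (b1 & b2 & -> & HP & HB).
    exists (fun _ => False). split; [|intros y []].
    apply St_zero. apply Permutation_length in HP. apply Forall2_length in HB. congruence.
  - apply req_step_sim_sigma1.
  - apply req_step_sim_sigma3.
  - intros s t S _ IH x H. apply req_app_inv in H as (s' & t' & -> & H1 & H2).
    destruct (IH _ H1) as (S' & HS' & E'). eexists. split; [apply (St_appL _ _ _ HS')|].
    intros y (s0 & Hs0 & ->). destruct (E' _ Hs0) as (s1 & Hs1 & R).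
    exists (RApp s1 t'). split; [eexists; eauto|constructor; auto].
  - intros s t S _ IH x H. apply req_app_inv in H as (s' & t' & -> & H1 & H2).
    destruct (IH _ H2) as (S' & HS' & E'). eexists. split; [apply (St_appR _ _ _ HS')|].
    intros y (s0 & Hs0 & ->). destruct (E' _ Hs0) as (s1 & Hs1 & R).
    exists (RApp s' s1). split; [eexists; eauto|constructor; auto].
  - intros b1 v b2 V _ IH x H. apply req_bag_inv in H as (d & c & -> & HP & HB).
    destruct (Permutation_elt_inv _ _ _ _ HP) as (d1 & d2 & -> & P2).
    apply Forall2_app_inv_l in HB as (c1 & c2' & B1 & B2 & ->).
    inversion B2 as [|? v' ? c2 Hv B2']; subst.
    destruct (IH _ Hv) as (V' & HV' & E'). eexists. split; [apply (St_bag _ _ _ _ HV')|].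
    intros y (w & Hw & ->). destruct (E' _ Hw) as (w' & Hw' & R).
    exists (RBag (c1 ++ w' :: c2)). split; [eexists; eauto|].
    apply (req_bag' _ (d1 ++ w :: d2)); [apply Permutation_elt; auto|].
    apply Forall2_app; auto.
  - intros t T _ IH x H. apply vreq_lam_inv in H as (t' & -> & H).
    destruct (IH _ H) as (T' & HT' & E'). eexists. split; [apply (St_lam _ _ HT')|].
    intros y (s0 & Hs0 & ->). destruct (E' _ Hs0) as (s1 & Hs1 & R).
    exists (RLam s1). split; [eexists; eauto|constructor; auto].
Qed.

Lemma red_nf_req e u : red_nf e u -> forall e', req e e' -> exists u', red_nf e' u' /\ req u u'.
Proof.
  induction 1 as [e Hn|e E y u HE Hy _ IH]; intros e' He.
  - exists e'. split; [|auto]. constructor. intros (E' & HE').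
    destruct ((proj1 req_sim) _ _ HE' e ((proj1 req_sym) _ _ He)) as (E & HE & _).
    apply Hn. eauto.
  - destruct ((proj1 req_sim) _ _ HE e' He) as (E' & HE' & F).
    destruct (F _ Hy) as (y' & Hy' & R). destruct (IH _ R) as (u' & Hu' & R').
    exists u'. split; auto. eapply red_nf_step; eauto.
Qed.

(** * Head contexts *)

Definition nf_sim (X Y : rterm -> Prop) : Prop :=
  forall t, NF X t -> exists t', req t t' /\ NF Y t'.

Lemma nf_sim_app M N Q : nf_sim (taylor M) (taylor N) -> nf_sim (taylor (LApp M Q)) (taylor (LApp N Q)).
Proof.
  intros H t Ht. apply NF_red_nf in Ht as (e & (s & q & Hs & Hq & ->) & Hn).
  apply (rctx_red_nf_iff _ (rctx_app_l q)) in Hn as (s' & H1 & H2); [|intros; apply nf_stable_all].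
  destruct (H s') as (s'' & R & Hs'). { apply NF_red_nf. eauto. }
  apply NF_red_nf in Hs' as (n & Hn & Hnn).
  destruct (red_nf_req _ _ H2 (RApp s'' q)) as (t' & Ht' & R').
  { constructor; auto. apply (proj1 req_refl). }
  exists t'. split; auto. apply NF_red_nf. exists (RApp n q). split; [simpl; eauto|].
  apply (rctx_red_nf _ (rctx_app_l q) _ _ _ Hnn Ht').
Qed.

Lemma bag_lam_normal ts : Forall rnormal ts -> rnormal (RBag (map RLam ts)).
Proof.
  intros HF (S & HS). apply rstep_bag_inv in HS as (b1 & v & b2 & V & E & HV & _).
  inversion HV as [t T HT]; subst.
  assert (Hin : In (RLam t) (map RLam ts)) by (rewrite E; apply in_elt).
  apply in_map_iff in Hin as (x & [=->] & Hx).
  rewrite Forall_forall in HF. apply (HF _ Hx). eauto.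
Qed.

Lemma bag_lam_red_nf ts pre u : red_nf (RBag (pre ++ map RLam ts)) u <->
  exists ts', Forall2 red_nf ts ts' /\ red_nf (RBag (pre ++ map RLam ts')) u.
Proof.
  revert pre. induction ts as [|a ts IH]; intros pre; simpl.
  - split; [exists []; auto|intros (ts' & HF & H); inversion HF; subst; auto].
  - rewrite (rctx_red_nf_iff _ (rctx_bag_lam pre (map RLam ts))); [|intros; apply nf_stable_all].
    split.
    + intros (a' & H1 & H2). replace (pre ++ RLam a' :: map RLam ts) with
        ((pre ++ [RLam a']) ++ map RLam ts) in H2 by (rewrite <- app_assoc; reflexivity).
      apply IH in H2 as (ts' & HF & H3). exists (a' :: ts'). split; auto.
      rewrite <- app_assoc in H3. exact H3.
    + intros (ts' & HF & H). inversion HF as [|? a' ? ts'' Ha HF']; subst.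
      exists a'. split; auto. simpl in H.
      replace (pre ++ RLam a' :: map RLam ts) with ((pre ++ [RLam a']) ++ map RLam ts)
        by (rewrite <- app_assoc; reflexivity).
      apply IH. exists ts''. rewrite <- app_assoc. auto.
Qed.

Lemma Forall2_red_nf_normal ts ts' : Forall2 red_nf ts ts' -> Forall rnormal ts'.
Proof. induction 1; constructor; eauto using red_nf_is_normal. Qed.

Lemma nf_sim_lam M N : nf_sim (taylor M) (taylor N) -> nf_sim (taylor (LLam M)) (taylor (LLam N)).
Proof.
  intros H t Ht. apply NF_red_nf in Ht as (e & (ts & Hts & ->) & Hn).
  apply (bag_lam_red_nf ts []) in Hn as (ts' & F2 & Hn'). simpl in Hn'.
  apply red_nf_of_normal in Hn' as ->; [|apply bag_lam_normal, (Forall2_red_nf_normal _ _ F2)].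
  assert (exists ns t3s, Forall (taylor N) ns /\ Forall2 red_nf ns t3s /\ Forall2 req ts' t3s)
    as (ns & t3s & Fns & F3 & FR).
  { induction F2 as [|x y ts ts' Hxy F2 IH]; [exists [], []; repeat constructor|].
    inversion Hts as [|? ? Hx Hts']; subst. destruct (IH Hts') as (ns & t3s & A1 & A2 & A3).
    destruct (H y) as (y3 & R3 & N3); [apply NF_red_nf; eauto|].
    apply NF_red_nf in N3 as (n3 & Hn3 & Hnn3).
    exists (n3 :: ns), (y3 :: t3s). repeat constructor; auto. }
  exists (RBag (map RLam t3s)). split.
  - apply (req_bag' _ (map RLam ts')); auto.
    clear -FR. induction FR; simpl; constructor; auto. constructor. auto.
  - apply NF_red_nf. exists (RBag (map RLam ns)). split; [simpl; eauto|].
    apply (bag_lam_red_nf ns []). exists t3s. split; auto. constructor.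
    apply bag_lam_normal, (Forall2_red_nf_normal _ _ F3).
Qed.

Lemma nf_sim_apps Vs X Y : nf_sim (taylor X) (taylor Y) ->
  nf_sim (taylor (fold_left LApp Vs X)) (taylor (fold_left LApp Vs Y)).
Proof. revert X Y. induction Vs; intros X Y H; [exact H|apply IHVs, nf_sim_app, H]. Qed.

Lemma nf_sim_lams n X Y : nf_sim (taylor X) (taylor Y) ->
  nf_sim (taylor (lams n X)) (taylor (lams n Y)).
Proof. intro H. induction n; [exact H|apply nf_sim_lam; exact IHn]. Qed.

Lemma nf_sim_of_mset_eq E F : mset_eq (NF E) (NF F) -> nf_sim E F.
Proof.
  intros H t Ht. apply (H t). exists t. split; auto. apply (proj1 req_refl).
Qed.

Lemma mset_eq_of_nf_sim E F : nf_sim E F -> nf_sim F E -> mset_eq (NF E) (NF F).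
Proof.
  intros H1 H2 t. split; intros (t0 & R0 & H0);
    [destruct (H1 t0 H0) as (t1 & R1 & H)|destruct (H2 t0 H0) as (t1 & R1 & H)];
    exists t1; split; auto; eapply (proj1 req_trans); eauto.
Qed.

Theorem lemma4p6 (M N : lterm) :
  mset_eq (NF (taylor M)) (NF (taylor N)) ->
  forall (n : nat) (Vs : list lterm), Forall is_lval Vs ->
    mset_eq (NF (taylor (plug n Vs M))) (NF (taylor (plug n Vs N))).
Proof.
  intros HMN n Vs _. unfold plug.
  apply mset_eq_of_nf_sim; apply nf_sim_apps, nf_sim_lams.
  - apply nf_sim_of_mset_eq. exact HMN.
  - apply nf_sim_of_mset_eq. intro t. symmetry. apply HMN.
Qed.
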